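(* (Local Lipschitz continuity of the observer gain operators.) For every compact interval $[h_-,h_+]\subset(0,\infty)$ and every $M>0$ there exist constants $L_{Q1},L_{Q2}>0$ such that for all $h_1,h_2\in[h_-,h_+]$ and all $f_1,f_2\in C^1(\mathcal T_1)$ with $\|f_i\|_{C^1(\mathcal T_1)}\le M$, and for $i=1,2$, $$\|\mathcal Q_i(h_1,f_1)-\mathcal Q_i(h_2,f_2)\|\le L_{Qi}\max\{|h_1-h_2|,\|f_1-f_2\|\},$$ with sup norms over $[0,1]$ on the left and sup norms on the right.
   Context: Notation: $\mathcal T_1=\{(s,q):0\le s\le q\le 1\}$, $\mathcal T_3=\{(s,q):0\le q\le s\le 1\}$; $\|g\|$ is the sup norm. Observer kernels and gains: given a sensor delay $h>0$ and $f\in C^1(\mathcal T_1)$, let $F,P\in C^0(\mathcal T_1)$ and $M\in C^0(\mathcal T_3)$ be the unique solution of $F_s(s,q)=-F_q(s,q)+\int_s^qf(s,r)F(r,q)dr-f(s,q)$ on $\mathcal T_1$, $F(0,q)=0$; $hM_s(s,q)=M_q(s,q)+h\int_s^1f(s,r)M(r,q)dr$ on $\mathcal T_3$; $hP_s(s,q)=P_q(s,q)+h\int_q^1f(s,r)M(r,q)dr+h\int_s^qf(s,r)P(r,q)dr$ on $\mathcal T_1$; $M(s,s)=P(s,s)$, $P(0,q)=0$, $P(s,1)=hF(s,1)$. The observer gains are $Q_1(s)=-\frac1hM(s,0)$ and $Q_2(s)=-M(1,1-s)$, $s\in[0,1]$, and the observer gain operators are $\mathcal Q_i(h,f):=Q_i$,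 $i=1,2$, mapping into $C^0[0,1]$. *)

From Stdlib Require Import Reals.
From Coquelicot Require Import Coquelicot.
Open Scope R_scope.

Definition inT1 (s q : R) : Prop := 0 <= s /\ s <= q /\ q <= 1.
Definition inT3 (s q : R) : Prop := 0 <= q /\ q <= s /\ s <= 1.

Definition cont_on (D : R -> R -> Prop) (g : R -> R -> R) : Prop :=
  forall s q, D s q ->
    forall eps : R, 0 < eps -> exists delta : R, 0 < delta /\
      forall s' q', D s' q' -> Rabs (s' - s) < delta -> Rabs (q' - q) < delta ->
        Rabs (g s' q' - g s q) < eps.

(* f in C^1(T1): f continuous on T1, its partial derivatives exist in the
   interior of T1 and extend to continuous functions fs, fq on T1. *)
Definition C1_T1 (f fs fq : R -> R -> R) : Prop :=
  cont_on inT1 f /\ cont_on inT1 fs /\ cont_on inT1 fq /\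
  (forall s q, 0 < s -> s < q -> q < 1 ->
     is_derive (fun x => f x q) s (fs s q) /\
     is_derive (fun y => f s y) q (fq s q)).

Definition sup_T1 (g : R -> R -> R) : R :=
  real (Lub_Rbar (fun y => exists s q, inT1 s q /\ y = Rabs (g s q))).
Definition sup_01 (g : R -> R) : R :=
  real (Lub_Rbar (fun y => exists s, 0 <= s <= 1 /\ y = Rabs (g s))).

Definition C1_norm_T1 (f fs fq : R -> R -> R) : R :=
  Rmax (sup_T1 f) (Rmax (sup_T1 fs) (sup_T1 fq)).

(* (F, M, P) solves the observer kernel equations for delay h and f.
   F_s + F_q, h M_s - M_q, h P_s - P_q are the derivatives along the
   characteristics t |-> (s+t, q+t) and t |-> (s + h t, q - t). *)
Definition kernel_sol (h : R) (f F M P : R -> R -> R) : Prop :=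
  cont_on inT1 F /\ cont_on inT3 M /\ cont_on inT1 P /\
  (forall s q, 0 < s -> s < q -> q < 1 ->
     is_derive (fun t => F (s + t) (q + t)) 0
       (RInt (fun r => f s r * F r q) s q - f s q)) /\
  (forall q, 0 <= q <= 1 -> F 0 q = 0) /\
  (forall s q, 0 < q -> q < s -> s < 1 ->
     is_derive (fun t => M (s + h * t) (q - t)) 0
       (h * RInt (fun r => f s r * M r q) s 1)) /\
  (forall s q, 0 < s -> s < q -> q < 1 ->
     is_derive (fun t => P (s + h * t) (q - t)) 0
       (h * RInt (fun r => f s r * M r q) q 1
        + h * RInt (fun r => f s r * P r q) s q)) /\
  (forall s, 0 <= s <= 1 -> M s s = P s s) /\
  (forall q, 0 <= q <= 1 -> P 0 q = 0) /\
  (forall s, 0 <= s <= 1 -> P s 1 = h * F s 1).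

Definition gain_Q1 (h : R) (M : R -> R -> R) : R -> R := fun s => - (1 / h) * M s 0.
Definition gain_Q2 (M : R -> R -> R) : R -> R := fun s => - M 1 (1 - s).

From Stdlib Require Import Reals Lra Psatz List ClassicalEpsilon Classical.
From Coquelicot Require Import Coquelicot.
Open Scope R_scope.

(* Gluing M (below the diagonal) and P (on and above it) gives one kernel K
   on the unit square, which solves a single transport equation along the
   backward characteristics t |-> (s - h t, q + t) with right-hand side
   - h * RInt (f s r * K r q) over [s, 1]; they leave the square through the
   edge s = 0, where K = 0, or through the edge q = 1, where K = h F.  Likewise
   F solves a transport equation along the diagonals (s + t, q + t) and
   vanishes on s = 0.  Every estimate combines a comparison principle (a bound
   on the derivative along a characteristic bounds the increment) with a
   Gronwall argument in fixed-point form (apply the improvement step to the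
   supremum of an exponentially weighted function). *)


Definition cont_interval (g : R -> R) (a b : R) : Prop :=
  forall x, a <= x <= b -> forall eps, 0 < eps -> exists delta, 0 < delta /\
    forall y, a <= y <= b -> Rabs (y - x) < delta -> Rabs (g y - g x) < eps.

(* Projection of R onto [a, b]; it lets us extend a function continuous on
   [a, b] to a function continuous on all of R. *)
Definition clamp (a b x : R) : R := Rmax a (Rmin b x).

Lemma clamp_in a b x : a <= b -> a <= clamp a b x <= b.
Proof. intros; unfold clamp, Rmax, Rmin; repeat destruct Rle_dec; lra. Qed.

Lemma clamp_id a b x : a <= x <= b -> clamp a b x = x.
Proof. intros; unfold clamp, Rmax, Rmin; repeat destruct Rle_dec; lra. Qed.

Lemma clamp_nonexpansive a b x y :
  a <= b -> Rabs (clamp a b x - clamp a b y) <= Rabs (x - y).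
Proof.
  intros; unfold clamp, Rmax, Rmin; repeat destruct Rle_dec;
  unfold Rabs; repeat destruct Rcase_abs; lra.
Qed.

Lemma cont_interval_clamp g a b : a <= b -> cont_interval g a b ->
  forall x, continuity_pt (fun y => g (clamp a b y)) x.
Proof.
  intros Hab Hg x. apply continuity_pt_locally. intros eps.
  destruct (Hg (clamp a b x) (clamp_in a b x Hab) eps (cond_pos eps)) as [d [Hd H]].
  exists (mkposreal d Hd). intros u Hu. apply H; [apply clamp_in; auto|].
  eapply Rle_lt_trans; [apply clamp_nonexpansive; auto | exact Hu].
Qed.

Lemma cont_interval_sub g a b c d : a <= c -> d <= b ->
  cont_interval g a b -> cont_interval g c d.
Proof.
  intros H1 H2 Hg x Hx eps He. destruct (Hg x ltac:(lra) eps He) as [del [Hd H]].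
  exists del; split; auto. intros y Hy. apply H; lra.
Qed.

Lemma cont_interval_ext g1 g2 a b : (forall x, a <= x <= b -> g1 x = g2 x) ->
  cont_interval g1 a b -> cont_interval g2 a b.
Proof.
  intros E Hg x Hx eps He. destruct (Hg x Hx eps He) as [d [Hd H]].
  exists d; split; auto. intros y Hy Hyx. rewrite <- !E; auto.
Qed.

Lemma cont_interval_minus g1 g2 a b : cont_interval g1 a b -> cont_interval g2 a b ->
  cont_interval (fun x => g1 x - g2 x) a b.
Proof.
  intros H1 H2 x Hx eps He.
  destruct (H1 x Hx (eps / 2) ltac:(lra)) as [d1 [Hd1 K1]].
  destruct (H2 x Hx (eps / 2) ltac:(lra)) as [d2 [Hd2 K2]].
  exists (Rmin d1 d2); split; [apply Rmin_pos; auto|]. intros y Hy Hyx.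
  assert (A1 := K1 y Hy ltac:(eapply Rlt_le_trans; [exact Hyx | apply Rmin_l])).
  assert (A2 := K2 y Hy ltac:(eapply Rlt_le_trans; [exact Hyx | apply Rmin_r])).
  replace (g1 y - g2 y - (g1 x - g2 x)) with ((g1 y - g1 x) - (g2 y - g2 x)) by ring.
  eapply Rle_lt_trans; [apply Rabs_triang|]. rewrite Rabs_Ropp. lra.
Qed.

Lemma cont_interval_mult g1 g2 a b : cont_interval g1 a b -> cont_interval g2 a b ->
  cont_interval (fun x => g1 x * g2 x) a b.
Proof.
  intros H1 H2 x Hx eps He.
  set (m1 := Rabs (g1 x) + 1). set (m2 := Rabs (g2 x) + 1).
  assert (Hm1 : 0 < m1) by (unfold m1; pose proof (Rabs_pos (g1 x)); lra).
  assert (Hm2 : 0 < m2) by (unfold m2; pose proof (Rabs_pos (g2 x)); lra).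
  set (e := Rmin 1 (eps / (2 * (m1 + m2)))).
  assert (He0 : 0 < e) by (apply Rmin_pos; [lra | apply Rdiv_lt_0_compat; lra]).
  assert (He1 : e <= 1) by apply Rmin_l.
  assert (He2 : e * (m1 + m2) <= eps / 2).
  { assert (Hle : e <= eps / (2 * (m1 + m2))) by apply Rmin_r.
    apply Rmult_le_compat_r with (r := m1 + m2) in Hle; [|lra].
    replace (eps / (2 * (m1 + m2)) * (m1 + m2)) with (eps / 2) in Hle by (field; lra).
    exact Hle. }
  destruct (H1 x Hx e He0) as [d1 [Hd1 K1]]. destruct (H2 x Hx e He0) as [d2 [Hd2 K2]].
  exists (Rmin d1 d2); split; [apply Rmin_pos; auto|]. intros y Hy Hyx.
  assert (A1 := K1 y Hy ltac:(eapply Rlt_le_trans; [exact Hyx | apply Rmin_l])).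
  assert (A2 := K2 y Hy ltac:(eapply Rlt_le_trans; [exact Hyx | apply Rmin_r])).
  assert (Hg2 : Rabs (g2 y) <= m2).
  { unfold m2. replace (g2 y) with ((g2 y - g2 x) + g2 x) by ring.
    eapply Rle_trans; [apply Rabs_triang | lra]. }
  replace (g1 y * g2 y - g1 x * g2 x)
    with ((g1 y - g1 x) * g2 y + g1 x * (g2 y - g2 x)) by ring.
  eapply Rle_lt_trans; [apply Rabs_triang|]. rewrite !Rabs_mult.
  assert (Rabs (g1 y - g1 x) * Rabs (g2 y) <= e * m2)
    by (apply Rmult_le_compat; auto using Rabs_pos; lra).
  assert (Rabs (g1 x) * Rabs (g2 y - g2 x) <= m1 * e)
    by (apply Rmult_le_compat; auto using Rabs_pos; unfold m1; lra).
  nra.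
Qed.

(* This replaces
   every integral inequality of the paper by a pointwise derivative bound. *)
Lemma comparison_principle (g dg Phi dPhi : R -> R) a b :
  a <= b -> cont_interval g a b -> (forall t, is_derive Phi t (dPhi t)) ->
  (forall t, a < t < b -> is_derive g t (dg t) /\ Rabs (dg t) <= dPhi t) ->
  Rabs (g b - g a) <= Phi b - Phi a.
Proof.
  intros Hab Hg HPhi Hd.
  destruct (Req_dec a b) as [<- | Hne].
  { rewrite Rminus_diag, Rabs_R0. lra. }
  set (G := fun y => g (clamp a b y)).
  assert (HG : forall x, continuity_pt G x) by (apply cont_interval_clamp; auto).
  assert (HPc : forall x, continuity_pt Phi x).
  { intros x. apply continuity_pt_filterlim, (ex_derive_continuous Phi x).
    exists (dPhi x). apply HPhi. }
  assert (HGd : forall t, a < t < b -> is_derive G t (dg t)).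
  { intros t Ht. apply (is_derive_ext_loc g); [|apply Hd; auto].
    exists (mkposreal (Rmin (t - a) (b - t)) ltac:(apply Rmin_pos; lra)).
    intros y Hy. unfold G. rewrite clamp_id; auto. cbn in Hy.
    unfold ball in Hy; cbn in Hy; unfold AbsRing_ball, abs, minus, plus, opp in Hy; cbn in Hy.
    unfold Rmin in Hy; destruct Rle_dec; apply Rabs_def2 in Hy; lra. }
  assert (Hmono : forall sg : R, sg = 1 \/ sg = -1 ->
            sg * G b - Phi b <= sg * G a - Phi a).
  { intros sg Hsg.
    set (df := fun t => if Rlt_dec a t then if Rlt_dec t b
                        then sg * dg t - dPhi t else 0 else 0).
    destruct (MVT_gen (fun t => sg * G t - Phi t) a b df) as [c [Hc E]].
    - intros x Hx. rewrite Rmin_left in Hx by lra. rewrite Rmax_right in Hx by lra.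
      unfold df. destruct Rlt_dec; [|lra]. destruct Rlt_dec; [|lra].
      apply (is_derive_minus (fun t => sg * G t) Phi); [|apply HPhi].
      apply (is_derive_scal G x sg), HGd; lra.
    - intros x _. apply continuity_pt_minus; auto. apply continuity_pt_scal; auto.
    - assert (Hdf : df c <= 0).
      { unfold df. destruct Rlt_dec; [|lra]. destruct Rlt_dec; [|lra].
        destruct (Hd c ltac:(lra)) as [_ Hb].
        destruct Hsg as [-> | ->]; unfold Rabs in Hb; destruct Rcase_abs; lra. }
      rewrite Rmin_left in Hc by lra. rewrite Rmax_right in Hc by lra.
      assert (df c * (b - a) <= 0) by (apply Rmult_le_0_r; lra). lra. }
  assert (Hb : G b = g b) by (unfold G; rewrite clamp_id; lra).
  assert (Ha : G a = g a) by (unfold G; rewrite clamp_id; lra).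
  assert (H1 := Hmono 1 (or_introl eq_refl)).
  assert (H2 := Hmono (-1) (or_intror eq_refl)).
  rewrite Hb, Ha in H1, H2.
  unfold Rabs; destruct Rcase_abs; lra.
Qed.

Lemma comparison_principle_except (g dg Phi dPhi : R -> R) (ps : list R) :
  (forall t, is_derive Phi t (dPhi t)) ->
  forall a b, a <= b -> cont_interval g a b ->
  (forall t, a < t < b -> ~ In t ps -> is_derive g t (dg t) /\ Rabs (dg t) <= dPhi t) ->
  Rabs (g b - g a) <= Phi b - Phi a.
Proof.
  intros HPhi. induction ps as [|p ps IH]; intros a b Hab Hg Hd.
  { apply (comparison_principle g dg Phi dPhi); auto. }
  destruct (Rlt_dec a p) as [H1|H1]; [destruct (Rlt_dec p b) as [H2|H2]|].
  - assert (Hleft : Rabs (g p - g a) <= Phi p - Phi a).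
    { apply IH; [lra | apply (cont_interval_sub g a b); auto; lra|].
      intros t Ht Hn. apply Hd; [lra|]. intros [-> | Hin]; [lra | auto]. }
    assert (Hright : Rabs (g b - g p) <= Phi b - Phi p).
    { apply IH; [lra | apply (cont_interval_sub g a b); auto; lra|].
      intros t Ht Hn. apply Hd; [lra|]. intros [-> | Hin]; [lra | auto]. }
    replace (g b - g a) with ((g b - g p) + (g p - g a)) by ring.
    eapply Rle_trans; [apply Rabs_triang | lra].
  - apply IH; auto. intros t Ht Hn. apply Hd; auto. intros [-> | Hin]; [lra | auto].
  - apply IH; auto. intros t Ht Hn. apply Hd; auto. intros [-> | Hin]; [lra | auto].
Qed.

Lemma lipschitz_of_deriv_bound (g dg : R -> R) a b L : a <= b -> cont_interval g a b ->
  (forall t, a < t < b -> is_derive g t (dg t) /\ Rabs (dg t) <= L) ->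
  Rabs (g b - g a) <= L * (b - a).
Proof.
  intros Hab Hg Hd.
  assert (HL : forall t, is_derive (fun t => L * t) t L) by (intros; auto_derive; auto; ring).
  assert (H := comparison_principle g dg (fun t => L * t) (fun _ => L) a b Hab Hg HL Hd).
  lra.
Qed.

Lemma is_derive_reparam (G : R -> R) t0 c d : c <> 0 ->
  is_derive (fun u => G (t0 + c * u)) 0 d -> is_derive G t0 (d / c).
Proof.
  intros Hc H.
  assert (H2 : is_derive (fun x => (fun u => G (t0 + c * u)) ((x - t0) / c)) t0
                 (scal (1 / c) d)).
  { apply (is_derive_comp (fun u => G (t0 + c * u)) (fun x => (x - t0) / c)).
    - replace ((t0 - t0) / c) with 0 by (field; auto). exact H.
    - auto_derive; auto. }
  change (scal (1 / c) d) with (1 / c * d) in H2.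
  replace (d / c) with (1 / c * d) by (field; auto).
  apply (is_derive_ext (fun x => G (t0 + c * ((x - t0) / c)))); auto.
  intros x. f_equal. field. auto.
Qed.

Lemma ex_RInt_of_cont g a b : a <= b -> cont_interval g a b -> ex_RInt g a b.
Proof.
  intros Hab Hg. apply (ex_RInt_ext (fun y => g (clamp a b y))).
  - intros x Hx. rewrite Rmin_left in Hx by lra. rewrite Rmax_right in Hx by lra.
    rewrite clamp_id; auto; lra.
  - apply (ex_RInt_continuous (V := R_CompleteNormedModule)). intros z _.
    apply continuity_pt_filterlim. apply cont_interval_clamp; auto.
Qed.

(* Coquelicot's RInt_minus and RInt_Chasles, stated with the real operations
   (so that they can be used for rewriting). *)
Lemma RInt_minus_R (g1 g2 : R -> R) a b : ex_RInt g1 a b -> ex_RInt g2 a b ->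
  RInt (fun x => g1 x - g2 x) a b = RInt g1 a b - RInt g2 a b.
Proof. intros H1 H2. exact (RInt_minus g1 g2 a b H1 H2). Qed.

Lemma RInt_Chasles_R (g : R -> R) a b c : ex_RInt g a b -> ex_RInt g b c ->
  RInt g a b + RInt g b c = RInt g a c.
Proof. intros H1 H2. exact (RInt_Chasles g a b c H1 H2). Qed.

Lemma abs_RInt_le_open g a b L : a <= b -> 0 <= L -> ex_RInt g a b ->
  (forall t, a < t < b -> Rabs (g t) <= L) -> Rabs (RInt g a b) <= (b - a) * L.
Proof.
  intros Hab HL Hex Hb.
  set (g' := fun t => if Rlt_dec a t then if Rlt_dec t b then g t else 0 else 0).
  assert (E : forall x, Rmin a b < x < Rmax a b -> g x = g' x).
  { intros x Hx. rewrite Rmin_left in Hx by lra. rewrite Rmax_right in Hx by lra.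
    unfold g'. destruct Rlt_dec; [|lra]. destruct Rlt_dec; [|lra]. auto. }
  rewrite (RInt_ext _ _ _ _ E). apply abs_RInt_le_const; auto.
  - apply (ex_RInt_ext g); auto.
  - intros t Ht. unfold g'.
    destruct Rlt_dec; [destruct Rlt_dec|]; try (rewrite Rabs_R0; lra). apply Hb; lra.
Qed.

Definition inTr (Q s q : R) : Prop := 0 <= s /\ s <= q /\ q <= Q.
Definition inSq (s q : R) : Prop := 0 <= s <= 1 /\ 0 <= q <= 1.

Lemma cont_on_weaken (D D' : R -> R -> Prop) g :
  cont_on D g -> (forall s q, D' s q -> D s q) -> cont_on D' g.
Proof.
  intros H HD s q Hsq eps He. destruct (H s q (HD s q Hsq) eps He) as [d [Hd K]].
  exists d; split; auto.
Qed.

Lemma cont_on_minus (D : R -> R -> Prop) g1 g2 : cont_on D g1 -> cont_on D g2 ->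
  cont_on D (fun s q => g1 s q - g2 s q).
Proof.
  intros H1 H2 s q Hsq eps He.
  destruct (H1 s q Hsq (eps / 2) ltac:(lra)) as [d1 [Hd1 K1]].
  destruct (H2 s q Hsq (eps / 2) ltac:(lra)) as [d2 [Hd2 K2]].
  exists (Rmin d1 d2); split; [apply Rmin_pos; auto|]. intros s' q' Hs' A1 A2.
  assert (Hm1 := Rmin_l d1 d2). assert (Hm2 := Rmin_r d1 d2).
  assert (B1 := K1 s' q' Hs' ltac:(lra) ltac:(lra)).
  assert (B2 := K2 s' q' Hs' ltac:(lra) ltac:(lra)).
  replace (g1 s' q' - g2 s' q' - (g1 s q - g2 s q))
    with ((g1 s' q' - g1 s q) - (g2 s' q' - g2 s q)) by ring.
  eapply Rle_lt_trans; [apply Rabs_triang|]. rewrite Rabs_Ropp. lra.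
Qed.

Lemma cont_on_shift_q (D D' : R -> R -> Prop) g del : cont_on D g ->
  (forall s q, D' s q -> D s (q + del)) -> cont_on D' (fun s q => g s (q + del)).
Proof.
  intros H HD s q Hsq eps He. destruct (H s (q + del) (HD s q Hsq) eps He) as [d [Hd K]].
  exists d; split; auto. intros s' q' Hs' A1 A2. apply K; auto.
  replace (q' + del - (q + del)) with (q' - q) by ring. auto.
Qed.

Lemma cont_on_segment (D : R -> R -> Prop) g a b c d T : cont_on D g ->
  (forall t, 0 <= t <= T -> D (a + b * t) (c + d * t)) ->
  cont_interval (fun t => g (a + b * t) (c + d * t)) 0 T.
Proof.
  intros Hg Hin x Hx eps He. destruct (Hg _ _ (Hin x Hx) eps He) as [del [Hdel H]].
  set (m := 1 + Rabs b + Rabs d).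
  assert (Hb := Rabs_pos b). assert (Hd := Rabs_pos d).
  exists (del / m). split; [apply Rdiv_lt_0_compat; unfold m; lra|]. intros y Hy Hyx.
  assert (Hyx' : Rabs (y - x) * m < del).
  { apply Rmult_lt_compat_r with (r := m) in Hyx; [|unfold m; lra].
    replace (del / m * m) with del in Hyx by (field; unfold m; lra). auto. }
  assert (Hyx0 := Rabs_pos (y - x)).
  apply H; auto.
  - replace (a + b * y - (a + b * x)) with (b * (y - x)) by ring. rewrite Rabs_mult.
    unfold m in Hyx'. nra.
  - replace (c + d * y - (c + d * x)) with (d * (y - x)) by ring. rewrite Rabs_mult.
    unfold m in Hyx'. nra.
Qed.

Lemma cont_on_row (D : R -> R -> Prop) g q a b : cont_on D g ->
  (forall r, a <= r <= b -> D r q) -> cont_interval (fun r => g r q) a b.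
Proof.
  intros Hg HD x Hx eps He. destruct (Hg x q (HD x Hx) eps He) as [d [Hd H]].
  exists d; split; auto. intros y Hy Hyx. apply H; auto. rewrite Rminus_diag, Rabs_R0; auto.
Qed.

Lemma cont_on_col (D : R -> R -> Prop) g s a b : cont_on D g ->
  (forall r, a <= r <= b -> D s r) -> cont_interval (fun r => g s r) a b.
Proof.
  intros Hg HD x Hx eps He. destruct (Hg s x (HD x Hx) eps He) as [d [Hd H]].
  exists d; split; auto. intros y Hy Hyx. apply H; auto. rewrite Rminus_diag, Rabs_R0; auto.
Qed.

Definition list_bound (g : R -> R -> R) (l : list (Compactness.Tn 2 R)) : R :=
  fold_right (fun t acc => Rmax (Rabs (g (fst t) (fst (snd t))) + 1) acc) 0 l.

Lemma list_bound_in g l t : In t l -> Rabs (g (fst t) (fst (snd t))) + 1 <= list_bound g l.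
Proof.
  induction l as [|a l IH]; simpl; [tauto|]. intros [-> | H].
  - apply Rmax_l.
  - eapply Rle_trans; [apply IH; auto | apply Rmax_r].
Qed.

(* A function continuous on a closed subset of the unit square is bounded
   (Heine-Borel, via Coquelicot's compactness of boxes). *)
Lemma cont_on_closed_bounded (D : R -> R -> Prop) g :
  (forall x y, D x y -> 0 <= x <= 1 /\ 0 <= y <= 1) ->
  (forall x y, ~ D x y -> exists d, 0 < d /\
     forall x' y', Rabs (x' - x) < d -> Rabs (y' - y) < d -> ~ D x' y') ->
  cont_on D g -> exists B, forall x y, D x y -> Rabs (g x y) <= B.
Proof.
  intros Hsq Hcl Hc.
  (* a gauge: g oscillates by less than 1, or D is avoided, on each cell *)
  set (P := fun x y (d : posreal) =>
    (D x y -> forall x' y', D x' y' -> Rabs (x' - x) < d -> Rabs (y' - y) < d ->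
       Rabs (g x' y' - g x y) < 1) /\
    (~ D x y -> forall x' y', Rabs (x' - x) < d -> Rabs (y' - y) < d -> ~ D x' y')).
  assert (Hex : forall x y, exists d, P x y d).
  { intros x y. destruct (classic (D x y)) as [HD|HD].
    - destruct (Hc x y HD 1 Rlt_0_1) as [d [Hd H]]. exists (mkposreal d Hd).
      split; [intros _ x' y' HD' H1 H2; apply H; auto | tauto].
    - destruct (Hcl x y HD) as [d [Hd H]]. exists (mkposreal d Hd).
      split; [tauto | intros _ x' y'; apply H]. }
  set (delta := fun t : Compactness.Tn 2 R =>
                  epsilon (inhabits (mkposreal 1 Rlt_0_1)) (P (fst t) (fst (snd t)))).
  assert (Hdel : forall t, P (fst t) (fst (snd t)) (delta t))
    by (intros t; apply epsilon_spec, Hex).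
  assert (Hcomp := compactness_list 2 (0, (0, tt)) (1, (1, tt)) delta).
  apply NNPP. intros HN. apply Hcomp. intros [l Hl]. apply HN.
  exists (list_bound g l). intros x y HD.
  destruct (Hl (x, (y, tt))) as [t [Hin [_ Hclose]]].
  { simpl. destruct (Hsq x y HD). tauto. }
  destruct t as [t1 [t2 []]]. simpl in Hclose. destruct Hclose as [C1 [C2 _]].
  assert (Ht := list_bound_in g l _ Hin). simpl in Ht.
  destruct (Hdel (t1, (t2, tt))) as [Q1 Q2]. simpl in Q1, Q2.
  destruct (classic (D t1 t2)) as [HDt|HDt].
  - assert (H := Q1 HDt x y HD C1 C2).
    replace (g x y) with ((g x y - g t1 t2) + g t1 t2) by ring.
    eapply Rle_trans; [apply Rabs_triang | lra].
  - exfalso. exact (Q2 HDt x y C1 C2 HD).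
Qed.

Lemma cont_on_triangle_bounded Q g : Q <= 1 -> cont_on (inTr Q) g ->
  exists B, forall s q, inTr Q s q -> Rabs (g s q) <= B.
Proof.
  intros HQ Hg. apply cont_on_closed_bounded; [unfold inTr; intros; lra | | auto].
  intros x y H. unfold inTr in *.
  destruct (Rlt_dec x 0) as [H1|H1].
  { exists (- x); split; [lra|]. intros x' y' A1 _ [C _]. apply Rabs_def2 in A1. lra. }
  destruct (Rlt_dec y x) as [H2|H2].
  { exists ((x - y) / 2); split; [lra|]. intros x' y' A1 B1 [_ [C _]].
    apply Rabs_def2 in A1. apply Rabs_def2 in B1. lra. }
  destruct (Rlt_dec Q y) as [H3|H3].
  { exists (y - Q); split; [lra|]. intros x' y' _ B1 [_ [_ C]]. apply Rabs_def2 in B1. lra. }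
  exfalso. apply H. lra.
Qed.

Lemma cont_on_square_bounded g : cont_on inSq g ->
  exists B, forall s q, inSq s q -> Rabs (g s q) <= B.
Proof.
  intros Hg. apply cont_on_closed_bounded; [unfold inSq; intros; lra | | auto].
  intros x y H. unfold inSq in *.
  destruct (Rlt_dec x 0) as [H1|H1].
  { exists (- x); split; [lra|]. intros x' y' A _ [C _]. apply Rabs_def2 in A. lra. }
  destruct (Rlt_dec 1 x) as [H2|H2].
  { exists (x - 1); split; [lra|]. intros x' y' A _ [C _]. apply Rabs_def2 in A. lra. }
  destruct (Rlt_dec y 0) as [H3|H3].
  { exists (- y); split; [lra|]. intros x' y' _ B [_ C]. apply Rabs_def2 in B. lra. }
  destruct (Rlt_dec 1 y) as [H4|H4].
  { exists (y - 1); split; [lra|]. intros x' y' _ B [_ C]. apply Rabs_def2 in B. lra. }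
  exfalso. apply H. lra.
Qed.

Lemma Lub_Rbar_finite (E : R -> Prop) y0 B : E y0 -> (forall y, E y -> y <= B) ->
  (forall y, E y -> y <= real (Lub_Rbar E)) /\ real (Lub_Rbar E) <= B.
Proof.
  intros H0 HB. destruct (Lub_Rbar_correct E) as [Hub Hlub].
  assert (L1 : Rbar_le (Lub_Rbar E) (Finite B)) by (apply Hlub; intros y Hy; apply HB; auto).
  assert (L2 : Rbar_le (Finite y0) (Lub_Rbar E)) by (apply Hub; auto).
  destruct (Lub_Rbar E) as [l| |]; simpl in *; try tauto.
Qed.

Lemma sup_T1_ge g x y : (exists B, forall s q, inT1 s q -> Rabs (g s q) <= B) ->
  inT1 x y -> Rabs (g x y) <= sup_T1 g.
Proof.
  intros [B HB] Hxy. unfold sup_T1.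
  apply (Lub_Rbar_finite _ (Rabs (g x y)) B); [exists x, y; auto | | exists x, y; auto].
  intros z [s [q [Hs ->]]]. auto.
Qed.

Lemma sup_01_le g B : (forall s, 0 <= s <= 1 -> Rabs (g s) <= B) -> sup_01 g <= B.
Proof.
  intros HB. unfold sup_01.
  apply (Lub_Rbar_finite _ (Rabs (g 0)) B); [exists 0; split; auto; lra|].
  intros z [s [Hs ->]]. auto.
Qed.

(* Fixed-point form of Gronwall's lemma: if phi is bounded on D and every
   bound V of phi on D improves to V/2 + E, then 2E bounds phi on D
   (apply the hypothesis to V = sup phi). *)
Lemma sup_contraction (D : R -> R -> Prop) (phi : R -> R -> R) E :
  (exists B, forall x y, D x y -> phi x y <= B) ->
  (forall V, (forall x y, D x y -> phi x y <= V) -> forall x y, D x y -> phi x y <= V / 2 + E) ->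
  forall x y, D x y -> phi x y <= 2 * E.
Proof.
  intros [B HB] Hstep x y Hxy.
  set (S := fun z => exists s q, D s q /\ z = phi s q).
  destruct (Lub_Rbar_finite S (phi x y) B) as [Hup _]; [exists x, y; auto | |].
  { intros z [s [q [Hs ->]]]. auto. }
  set (L := real (Lub_Rbar S)) in *.
  assert (HL : forall s q, D s q -> phi s q <= L) by (intros s q Hs; apply Hup; exists s, q; auto).
  assert (HLE : L <= L / 2 + E).
  { apply (Lub_Rbar_finite S (phi x y)); [exists x, y; auto|].
    intros z [s [q [Hs ->]]]. apply (Hstep L HL); auto. }
  specialize (HL x y Hxy). lra.
Qed.

Lemma exp_weight_iff x V a : x * exp (- a) <= V <-> x <= V * exp a.
Proof.
  assert (Hm : exp (- a) * exp a = 1) by (rewrite <- exp_plus, Rplus_opp_l; apply exp_0).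
  assert (Ha := exp_pos a). assert (Hna := exp_pos (- a)).
  split; intros H.
  - replace x with (x * exp (- a) * exp a) by (rewrite Rmult_assoc, Hm; ring).
    apply Rmult_le_compat_r; lra.
  - replace V with (V * exp a * exp (- a)) by (rewrite Rmult_assoc, (Rmult_comm (exp a)), Hm; ring).
    apply Rmult_le_compat_r; lra.
Qed.

Lemma exp_le x y : x <= y -> exp x <= exp y.
Proof. intros [H | ->]; [left; apply exp_increasing; auto | lra]. Qed.

Lemma exp_le_1 x : x <= 0 -> exp x <= 1.
Proof. intros H. rewrite <- exp_0. apply exp_le; auto. Qed.

Lemma exp_ge_1 x : 0 <= x -> 1 <= exp x.
Proof. intros H. rewrite <- exp_0. apply exp_le; auto. Qed.

(* The proof bounds the weighted function |w s q| exp (-2 A q) by the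
   fixed-point argument sup_contraction. *)
Section DiagonalGronwall.

Variables (w dw : R -> R -> R) (Q A E : R).
Hypothesis HQ : 0 < Q <= 1.
Hypothesis HA : 0 < A.
Hypothesis HE : 0 <= E.
Hypothesis Hcont : cont_on (inTr Q) w.
Hypothesis Hedge : forall q, 0 <= q <= Q -> w 0 q = 0.
Hypothesis Hderiv : forall s q, 0 < s -> s < q -> q < Q ->
  is_derive (fun t => w (s + t) (q + t)) 0 (dw s q) /\
  forall W, (forall r, s <= r < q -> Rabs (w r q) <= W) -> Rabs (dw s q) <= A * W + E.

(* One improvement step: integrate the derivative bound along the
   characteristic from its starting point (0, q - s) on the edge. *)
Lemma diagonal_step V :
  (forall r q, 0 <= r < q -> q <= Q -> Rabs (w r q) <= V * exp (2 * A * q)) ->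
  forall s q, 0 <= s < q -> q <= Q -> Rabs (w s q) <= V / 2 * exp (2 * A * q) + E * s.
Proof.
  intros HV s q Hs Hq.
  assert (HV0 : 0 <= V).
  { assert (H := HV s q Hs Hq). assert (Hx := exp_pos (2 * A * q)).
    pose proof (Rabs_pos (w s q)). nra. }
  set (Phi := fun t => V / 2 * exp (2 * A * (q - s + t)) + E * t).
  assert (HPhi : forall t, is_derive Phi t (A * V * exp (2 * A * (q - s + t)) + E)).
  { intros t. unfold Phi. auto_derive; auto. field. }
  assert (Hc : cont_interval (fun t => w t (q - s + t)) 0 s).
  { apply (cont_interval_ext (fun t => w (0 + 1 * t) (q - s + 1 * t))).
    { intros t _. f_equal; ring. }
    apply (cont_on_segment (inTr Q) w 0 1 (q - s) 1 s Hcont). intros t Ht. unfold inTr; lra. }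
  assert (Hbound : forall t, 0 < t < s ->
    is_derive (fun t => w t (q - s + t)) t (dw t (q - s + t)) /\
    Rabs (dw t (q - s + t)) <= A * V * exp (2 * A * (q - s + t)) + E).
  { intros t Ht. destruct (Hderiv t (q - s + t) ltac:(lra) ltac:(lra) ltac:(lra)) as [Hd Hb].
    split.
    - replace (dw t (q - s + t)) with (dw t (q - s + t) / 1) by field.
      apply is_derive_reparam; [lra|].
      apply (is_derive_ext (fun u => w (t + u) (q - s + t + u))); auto.
      intros u. f_equal; ring.
    - rewrite Rmult_assoc. apply Hb. intros r Hr. apply HV; lra. }
  assert (Hcmp := comparison_principle (fun t => w t (q - s + t)) (fun t => dw t (q - s + t))
                    Phi _ 0 s ltac:(lra) Hc HPhi Hbound).
  unfold Phi in Hcmp. cbv beta in Hcmp. rewrite Hedge in Hcmp by lra.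
  replace (q - s + s) with q in Hcmp by ring.
  replace (q - s + 0) with (q - s) in Hcmp by ring.
  rewrite Rminus_0_r, Rmult_0_r, Rplus_0_r in Hcmp.
  assert (exp (2 * A * (q - s)) > 0) by apply exp_pos.
  assert (0 <= V / 2 * exp (2 * A * (q - s))) by (apply Rmult_le_pos; lra).
  lra.
Qed.

Lemma diagonal_gronwall :
  forall s q, 0 <= s < q -> q <= Q -> Rabs (w s q) <= 2 * E * exp (2 * A).
Proof.
  set (D := fun s q => 0 <= s < q /\ q <= Q).
  set (phi := fun s q => Rabs (w s q) * exp (- (2 * A * q))).
  assert (Hphi : forall s q, D s q -> phi s q <= 2 * E).
  { apply sup_contraction.
    - destruct (cont_on_triangle_bounded Q w ltac:(lra) Hcont) as [B HB].
      exists B. intros x y [Hx Hy]. unfold phi.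
      assert (exp (- (2 * A * y)) <= 1) by (apply exp_le_1; nra).
      assert (Rabs (w x y) <= B) by (apply HB; unfold inTr; lra).
      assert (Hp := exp_pos (- (2 * A * y))). pose proof (Rabs_pos (w x y)). nra.
    - intros V HV s q [Hs Hq]. apply exp_weight_iff.
      eapply Rle_trans.
      + apply diagonal_step; auto. intros r q' Hr Hq'. apply exp_weight_iff, HV.
        unfold D; lra.
      + rewrite Rmult_plus_distr_r.
        assert (E * s <= E * exp (2 * A * q)).
        { apply Rmult_le_compat_l; auto.
          assert (1 <= exp (2 * A * q)) by (apply exp_ge_1; nra). lra. }
        lra. }
  intros s q Hs Hq.
  apply Rle_trans with (2 * E * exp (2 * A * q)).
  - apply exp_weight_iff, Hphi. unfold D; lra.
  - apply Rmult_le_compat_l; [lra | apply exp_le; nra].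
Qed.

End DiagonalGronwall.

Section CharacteristicGronwall.

Variables (u : R -> R -> R) (A E B : R).
Hypothesis HA : 0 < A.
Hypothesis HE : 0 <= E.
Hypothesis HB : 0 <= B.
Hypothesis Hbounded : exists Bu, forall s q, inSq s q -> Rabs (u s q) <= Bu.
Hypothesis Hpath : forall s q, inSq s q ->
  exists (g dg : R -> R) (T : R) (ps : list R),
    0 <= T <= 1 - q /\ g 0 = u s q /\ Rabs (g T) <= B /\ cont_interval g 0 T /\
    forall V, (forall s' q', inSq s' q' -> Rabs (u s' q') <= V * exp (2 * A * (1 - q'))) ->
      forall t, 0 < t < T -> ~ In t ps ->
        is_derive g t (dg t) /\ Rabs (dg t) <= A * V * exp (2 * A * (1 - q - t)) + E.

(* One improvement step: integrate along the path and use |g T| <= B. *)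
Lemma characteristic_step V :
  (forall s q, inSq s q -> Rabs (u s q) <= V * exp (2 * A * (1 - q))) ->
  forall s q, inSq s q -> Rabs (u s q) <= V / 2 * exp (2 * A * (1 - q)) + (B + E).
Proof.
  intros HV s q Hsq.
  destruct (Hpath s q Hsq) as [g [dg [T [ps [HT [Hg0 [HgT [Hgc Hd]]]]]]]].
  set (Phi := fun t => - (V / 2) * exp (2 * A * (1 - q - t)) + E * t).
  assert (HPhi : forall t, is_derive Phi t (A * V * exp (2 * A * (1 - q - t)) + E)).
  { intros t. unfold Phi. auto_derive; auto. replace (1 - q + - t) with (1 - q - t) by ring.
    field. }
  assert (Hcmp := comparison_principle_except g dg Phi _ ps HPhi 0 T ltac:(lra) Hgc (Hd V HV)).
  unfold Phi in Hcmp. rewrite Hg0 in Hcmp.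
  replace (1 - q - 0) with (1 - q) in Hcmp by ring.
  assert (HV0 : 0 <= V).
  { assert (H := HV s q Hsq). assert (Hx := exp_pos (2 * A * (1 - q))).
    pose proof (Rabs_pos (u s q)). nra. }
  assert (0 <= V / 2 * exp (2 * A * (1 - q - T))) by (apply Rmult_le_pos; [lra | left; apply exp_pos]).
  assert (E * T <= E) by (destruct Hsq as [_ [Hq _]]; nra).
  replace (u s q) with (g T - (g T - u s q)) by ring.
  eapply Rle_trans; [apply Rabs_triang|]. rewrite Rabs_Ropp. lra.
Qed.

Lemma characteristic_gronwall :
  forall s q, inSq s q -> Rabs (u s q) <= 2 * (B + E) * exp (2 * A).
Proof.
  set (phi := fun s q => Rabs (u s q) * exp (- (2 * A * (1 - q)))).
  assert (Hphi : forall s q, inSq s q -> phi s q <= 2 * (B + E)).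
  { apply sup_contraction.
    - destruct Hbounded as [Bu HBu]. exists Bu. intros x y Hxy. unfold phi.
      assert (exp (- (2 * A * (1 - y))) <= 1)
        by (apply exp_le_1; destruct Hxy as [_ [_ Hy]]; nra).
      assert (Hp := exp_pos (- (2 * A * (1 - y)))).
      assert (Rabs (u x y) <= Bu) by auto. pose proof (Rabs_pos (u x y)). nra.
    - intros V HV s q Hsq. apply exp_weight_iff.
      eapply Rle_trans.
      + apply characteristic_step; auto. intros s' q' H'. apply exp_weight_iff, HV; auto.
      + rewrite Rmult_plus_distr_r.
        assert (B + E <= (B + E) * exp (2 * A * (1 - q))).
        { assert (1 <= exp (2 * A * (1 - q)))
            by (apply exp_ge_1; destruct Hsq as [_ [_ Hq]]; nra). nra. }
        lra. }
  intros s q Hsq.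
  apply Rle_trans with (2 * (B + E) * exp (2 * A * (1 - q))).
  - apply exp_weight_iff, Hphi; auto.
  - apply Rmult_le_compat_l; [lra | apply exp_le; destruct Hsq as [_ [Hq _]]; nra].
Qed.

End CharacteristicGronwall.

(* A bound c0 + c1 s on |u| valid off the diagonal of T1 extends to the
   diagonal by continuity; the kernel equations only control F and P strictly
   inside the triangle. *)
Lemma bound_extends_to_diagonal (u : R -> R -> R) c0 c1 : cont_on inT1 u -> 0 <= c1 ->
  (forall s q, inT1 s q -> s < q -> Rabs (u s q) <= c0 + c1 * s) ->
  forall s q, inT1 s q -> Rabs (u s q) <= c0 + c1 * s.
Proof.
  intros Hc Hc1 H s q Hsq. destruct (Rlt_dec s q) as [Hl|Hl]; [apply H; auto|].
  assert (Hq : q = s) by (unfold inT1 in Hsq; lra). subst q.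
  apply Rnot_lt_le. intros Hgt.
  set (eps := Rabs (u s s) - (c0 + c1 * s)).
  destruct (Hc s s Hsq eps ltac:(unfold eps; lra)) as [d [Hd Hcd]].
  assert (Hnear : exists s' q', inT1 s' q' /\ s' < q' /\ s' <= s /\
                    Rabs (s' - s) < d /\ Rabs (q' - s) < d).
  { destruct (Rlt_dec 0 s) as [Hs|Hs].
    - set (s' := s - Rmin (s / 2) (d / 2)).
      assert (Hm1 := Rmin_l (s / 2) (d / 2)). assert (Hm2 := Rmin_r (s / 2) (d / 2)).
      assert (Hm0 : 0 < Rmin (s / 2) (d / 2)) by (apply Rmin_pos; lra).
      exists s', s. unfold inT1 in *; unfold s'.
      rewrite Rminus_diag, Rabs_R0, Rabs_left by lra. repeat split; lra.
    - set (q' := Rmin (1 / 2) (d / 2)).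
      assert (Hm1 : q' <= 1 / 2) by apply Rmin_l. assert (Hm2 : q' <= d / 2) by apply Rmin_r.
      assert (Hm0 : 0 < q') by (apply Rmin_pos; lra).
      assert (s = 0) by (unfold inT1 in Hsq; lra). subst s.
      exists 0, q'. rewrite Rminus_diag, Rabs_R0, Rminus_0_r, Rabs_right by lra.
      unfold inT1; repeat split; lra. }
  destruct Hnear as [s' [q' [Hin [Hlt [Hss [Hs' Hq']]]]]].
  assert (A1 := H s' q' Hin Hlt).
  assert (A2 := Hcd s' q' Hin Hs' Hq').
  assert (c1 * s' <= c1 * s) by (apply Rmult_le_compat_l; lra).
  assert (Rabs (u s s) <= Rabs (u s' q') + Rabs (u s' q' - u s s)).
  { replace (u s s) with (u s' q' - (u s' q' - u s s)) at 1 by ring.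
    eapply Rle_trans; [apply Rabs_triang|]. rewrite Rabs_Ropp. lra. }
  unfold eps in *. lra.
Qed.

Lemma abs_RInt_mult_le (g1 g2 : R -> R) a b M1 M2 : a <= b -> 0 <= M1 -> 0 <= M2 ->
  ex_RInt (fun r => g1 r * g2 r) a b ->
  (forall r, a < r < b -> Rabs (g1 r) <= M1) -> (forall r, a < r < b -> Rabs (g2 r) <= M2) ->
  Rabs (RInt (fun r => g1 r * g2 r) a b) <= (b - a) * (M1 * M2).
Proof.
  intros Hab H1 H2 Hex B1 B2. apply abs_RInt_le_open; auto; [nra|].
  intros r Hr. rewrite Rabs_mult. apply Rmult_le_compat; auto using Rabs_pos.
Qed.

Lemma lipschitz_symmetrize (I : R -> Prop) (g : R -> R) L :
  (forall a b, a <= b -> I a -> I b -> Rabs (g b - g a) <= L * (b - a)) ->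
  forall a b, I a -> I b -> Rabs (g b - g a) <= L * Rabs (b - a).
Proof.
  intros H a b Ha Hb. destruct (Rle_dec a b) as [Hab|Hab].
  - rewrite (Rabs_right (b - a)) by lra. auto.
  - rewrite Rabs_minus_sym, (Rabs_left (b - a)) by lra.
    replace (- (b - a)) with (a - b) by ring. apply H; auto; lra.
Qed.

Section CoefficientBounds.

Variables (f fs fq : R -> R -> R) (Mb : R).
Hypothesis HC : C1_T1 f fs fq.
Hypothesis HN : C1_norm_T1 f fs fq <= Mb.

Lemma f_bounds : forall s q, inT1 s q ->
  Rabs (f s q) <= Mb /\ Rabs (fs s q) <= Mb /\ Rabs (fq s q) <= Mb.
Proof.
  destruct HC as [Hf [Hfs [Hfq _]]]. intros s q Hsq. unfold C1_norm_T1 in HN.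
  assert (A1 := Rmax_l (sup_T1 f) (Rmax (sup_T1 fs) (sup_T1 fq))).
  assert (A2 := Rmax_r (sup_T1 f) (Rmax (sup_T1 fs) (sup_T1 fq))).
  assert (A3 := Rmax_l (sup_T1 fs) (sup_T1 fq)).
  assert (A4 := Rmax_r (sup_T1 fs) (sup_T1 fq)).
  assert (B1 := sup_T1_ge f s q (cont_on_triangle_bounded 1 f (Rle_refl 1) Hf) Hsq).
  assert (B2 := sup_T1_ge fs s q (cont_on_triangle_bounded 1 fs (Rle_refl 1) Hfs) Hsq).
  assert (B3 := sup_T1_ge fq s q (cont_on_triangle_bounded 1 fq (Rle_refl 1) Hfq) Hsq).
  lra.
Qed.

Lemma f_lipschitz_s q : q < 1 ->
  forall a b, inT1 a q -> inT1 b q -> Rabs (f b q - f a q) <= Mb * Rabs (b - a).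
Proof.
  intros Hq. apply (lipschitz_symmetrize (fun a => inT1 a q) (fun t => f t q)).
  intros a b Hab Ha Hb. destruct HC as [Hf [_ [_ Hd]]].
  apply (lipschitz_of_deriv_bound (fun t => f t q) (fun t => fs t q)); auto.
  - apply (cont_on_row inT1); auto. intros r Hr. unfold inT1 in *; lra.
  - intros t Ht. unfold inT1 in *. split; [apply (Hd t q); lra|].
    apply f_bounds; unfold inT1; lra.
Qed.

Lemma f_lipschitz_q s : 0 < s ->
  forall a b, inT1 s a -> inT1 s b -> Rabs (f s b - f s a) <= Mb * Rabs (b - a).
Proof.
  intros Hs. apply (lipschitz_symmetrize (fun a => inT1 s a) (fun t => f s t)).
  intros a b Hab Ha Hb. destruct HC as [Hf [_ [_ Hd]]].
  apply (lipschitz_of_deriv_bound (fun t => f s t) (fun t => fq s t)); auto.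
  - apply (cont_on_col inT1); auto. intros r Hr. unfold inT1 in *; lra.
  - intros t Ht. unfold inT1 in *. split; [apply (Hd s t); lra|].
    apply f_bounds; unfold inT1; lra.
Qed.

End CoefficientBounds.

Lemma sup_T1_diff_ge f1 f1s f1q f2 f2s f2q Mb :
  C1_T1 f1 f1s f1q -> C1_T1 f2 f2s f2q ->
  C1_norm_T1 f1 f1s f1q <= Mb -> C1_norm_T1 f2 f2s f2q <= Mb ->
  forall s q, inT1 s q -> Rabs (f1 s q - f2 s q) <= sup_T1 (fun s q => f1 s q - f2 s q).
Proof.
  intros HC1 HC2 HN1 HN2 s q Hsq. apply (sup_T1_ge (fun s q => f1 s q - f2 s q)); auto.
  exists (2 * Mb). intros a b Hab.
  destruct (f_bounds f1 f1s f1q Mb HC1 HN1 a b Hab) as [B1 _].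
  destruct (f_bounds f2 f2s f2q Mb HC2 HN2 a b Hab) as [B2 _].
  unfold Rminus. eapply Rle_trans; [apply Rabs_triang|]. rewrite Rabs_Ropp. lra.
Qed.

Definition admissible (Mb hp h : R) (f fs fq F M P : R -> R -> R) : Prop :=
  0 < Mb /\ 0 < h <= hp /\ C1_T1 f fs fq /\ C1_norm_T1 f fs fq <= Mb /\
  kernel_sol h f F M P.

Definition rhsF (f F : R -> R -> R) (s q : R) : R :=
  RInt (fun r => f s r * F r q) s q - f s q.

Lemma ex_RInt_fF (f F : R -> R -> R) s q : cont_on inT1 f -> cont_on inT1 F -> inT1 s q ->
  ex_RInt (fun r => f s r * F r q) s q.
Proof.
  intros Hf HF Hsq. unfold inT1 in Hsq. apply ex_RInt_of_cont; [lra|].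
  apply cont_interval_mult.
  - apply (cont_on_col inT1); auto. intros r Hr; unfold inT1; lra.
  - apply (cont_on_row inT1); auto. intros r Hr; unfold inT1; lra.
Qed.

(* The a priori bound on F. *)
Definition CF (Mb : R) : R := 2 * Mb * exp (2 * Mb).

(* Bound on the Lipschitz constant of s |-> F s 1. *)
Definition CL (Mb : R) : R := Mb * (CF Mb + 1) * (1 + 2 * exp (2 * Mb)).

Lemma CF_pos Mb : 0 < Mb -> 0 < CF Mb.
Proof. intros H. unfold CF. assert (Hx := exp_pos (2 * Mb)). apply Rmult_lt_0_compat; lra. Qed.

Section OneKernelF.

Context {Mb hp h : R} {f fs fq F M P : R -> R -> R}.
Hypothesis Had : admissible Mb hp h f fs fq F M P.

Let HMb : 0 < Mb := proj1 Had.
Let HC : C1_T1 f fs fq := proj1 (proj2 (proj2 Had)).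
Let HN : C1_norm_T1 f fs fq <= Mb := proj1 (proj2 (proj2 (proj2 Had))).
Let HK : kernel_sol h f F M P := proj2 (proj2 (proj2 (proj2 Had))).
Let Hf_cont : cont_on inT1 f := proj1 HC.
Let HF_cont : cont_on inT1 F := proj1 HK.
Let HF_deriv : forall s q, 0 < s -> s < q -> q < 1 ->
    is_derive (fun t => F (s + t) (q + t)) 0 (rhsF f F s q) :=
  proj1 (proj2 (proj2 (proj2 HK))).
Let HF_edge : forall q, 0 <= q <= 1 -> F 0 q = 0 :=
  proj1 (proj2 (proj2 (proj2 (proj2 HK)))).
Let Hfb := f_bounds f fs fq Mb HC HN.

Lemma rhsF_bound a q W : 0 <= a <= q -> q <= 1 -> 0 <= W ->
  (forall r, a < r < q -> Rabs (F r q) <= W) -> Rabs (rhsF f F a q) <= Mb * W + Mb.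
Proof.
  intros Haq Hq HW HFW. unfold rhsF.
  assert (HI := abs_RInt_mult_le (fun r => f a r) (fun r => F r q) a q Mb W ltac:(lra)
                  ltac:(lra) HW (ex_RInt_fF f F a q Hf_cont HF_cont ltac:(unfold inT1; lra))
                  ltac:(intros r Hr; apply Hfb; unfold inT1; lra) HFW).
  assert (Hf0 : Rabs (f a q) <= Mb) by (apply Hfb; unfold inT1; lra).
  assert ((q - a) * (Mb * W) <= Mb * W) by (assert (0 <= Mb * W) by nra; nra).
  unfold Rminus at 1. eapply Rle_trans; [apply Rabs_triang|]. rewrite Rabs_Ropp. lra.
Qed.

(* A priori bound: Gronwall along the diagonals, from the edge s = 0. *)
Lemma F_bound : forall s q, inT1 s q -> Rabs (F s q) <= CF Mb.
Proof.
  assert (Hoff : forall s q, inT1 s q -> s < q -> Rabs (F s q) <= CF Mb + 0 * s).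
  { intros s q Hsq Hlt. rewrite Rmult_0_l, Rplus_0_r. unfold CF.
    apply (diagonal_gronwall F (rhsF f F) 1 Mb Mb); try lra; auto; [|unfold inT1 in *; lra..].
    intros s0 q0 Hs0 Hsq0 Hq0. split; [apply HF_deriv; lra|].
    intros W HW. assert (HW0 : 0 <= W) by (eapply Rle_trans; [apply Rabs_pos | apply (HW s0); lra]).
    apply rhsF_bound; try lra. intros r Hr; apply HW; lra. }
  intros s q Hsq. assert (H := bound_extends_to_diagonal F (CF Mb) 0 HF_cont (Rle_refl 0) Hoff s q Hsq).
  lra.
Qed.

Lemma F_lipschitz_diagonal a b c : 0 < c -> 0 <= a <= b -> c + b <= 1 ->
  Rabs (F b (c + b) - F a (c + a)) <= Mb * (CF Mb + 1) * (b - a).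
Proof.
  intros Hc Hab Hcb. assert (HCF := CF_pos Mb HMb).
  apply (lipschitz_of_deriv_bound (fun t => F t (c + t)) (fun t => rhsF f F t (c + t))); [lra| |].
  - apply (cont_interval_ext (fun t => F (0 + 1 * t) (c + 1 * t))); [intros t _; f_equal; ring|].
    apply (cont_interval_sub _ 0 b); [lra | lra|].
    apply (cont_on_segment inT1 F 0 1 c 1 b HF_cont). intros t Ht; unfold inT1; lra.
  - intros t Ht. split.
    + replace (rhsF f F t (c + t)) with (rhsF f F t (c + t) / 1) by field.
      apply is_derive_reparam; [lra|].
      apply (is_derive_ext (fun u => F (t + u) (c + t + u))); [intros u; f_equal; ring|].
      apply HF_deriv; lra.
    + replace (Mb * (CF Mb + 1)) with (Mb * CF Mb + Mb) by ring.
      apply rhsF_bound; try lra. intros r Hr. apply F_bound; unfold inT1; lra.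
Qed.

(* F vanishes on the edge s = 0, hence grows at most linearly in s. *)
Lemma F_linear_growth : forall s q, inT1 s q -> Rabs (F s q) <= Mb * (CF Mb + 1) * s.
Proof.
  intros s q Hsq. assert (HCF := CF_pos Mb HMb).
  rewrite <- (Rplus_0_l (Mb * (CF Mb + 1) * s)).
  apply (bound_extends_to_diagonal F 0 (Mb * (CF Mb + 1)) HF_cont ltac:(nra)); auto.
  clear s q Hsq. intros s q Hsq Hl. rewrite Rplus_0_l.
  assert (Y := F_lipschitz_diagonal 0 s (q - s) ltac:(lra) ltac:(unfold inT1 in *; lra)
                 ltac:(unfold inT1 in *; lra)).
  replace (q - s + s) with q in Y by ring. rewrite Rplus_0_r in Y.
  rewrite HF_edge in Y by (unfold inT1 in *; lra). rewrite !Rminus_0_r in Y. exact Y.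
Qed.

Lemma rhsF_shift_bound del a q W : 0 < del -> 0 < a < q -> q + del <= 1 -> 0 <= W ->
  (forall r, a <= r < q -> Rabs (F r (q + del) - F r q) <= W) ->
  Rabs (rhsF f F a (q + del) - rhsF f F a q) <= Mb * W + del * Mb * (CF Mb + 1).
Proof.
  intros Hdel Haq Hq HW HFW. assert (HCF := CF_pos Mb HMb).
  assert (E0 := ex_RInt_fF f F a (q + del) Hf_cont HF_cont ltac:(unfold inT1; lra)).
  assert (E1 : ex_RInt (fun r => f a r * F r (q + del)) a q)
    by (apply (ex_RInt_Chasles_1 (V := R_CompleteNormedModule) _ a q (q + del)); auto; lra).
  assert (E2 : ex_RInt (fun r => f a r * F r (q + del)) q (q + del))
    by (apply (ex_RInt_Chasles_2 (V := R_CompleteNormedModule) _ a q (q + del)); auto; lra).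
  assert (E3 := ex_RInt_fF f F a q Hf_cont HF_cont ltac:(unfold inT1; lra)).
  assert (Hsplit : rhsF f F a (q + del) - rhsF f F a q =
     RInt (fun r => f a r * (F r (q + del) - F r q)) a q
     + RInt (fun r => f a r * F r (q + del)) q (q + del) - (f a (q + del) - f a q)).
  { assert (Hdiff : RInt (fun r => f a r * (F r (q + del) - F r q)) a q =
              RInt (fun r => f a r * F r (q + del)) a q - RInt (fun r => f a r * F r q) a q).
    { rewrite <- RInt_minus_R by auto. apply RInt_ext. intros x _. apply Rmult_minus_distr_l. }
    unfold rhsF. rewrite <- (RInt_Chasles_R _ a q (q + del)) by auto.
    rewrite Hdiff. ring. }
  assert (I1 : Rabs (RInt (fun r => f a r * (F r (q + del) - F r q)) a q) <= (q - a) * (Mb * W)).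
  { apply abs_RInt_mult_le; try lra.
    - apply (ex_RInt_ext (fun r => f a r * F r (q + del) - f a r * F r q));
        [intros; symmetry; apply Rmult_minus_distr_l|].
      apply (ex_RInt_minus (V := R_NormedModule)); auto.
    - intros r Hr; apply Hfb; unfold inT1; lra.
    - intros r Hr; apply HFW; lra. }
  assert (I2 : Rabs (RInt (fun r => f a r * F r (q + del)) q (q + del)) <= (q + del - q) * (Mb * CF Mb)).
  { apply abs_RInt_mult_le; try lra; auto.
    - intros r Hr; apply Hfb; unfold inT1; lra.
    - intros r Hr; apply F_bound; unfold inT1; lra. }
  assert (I3 : Rabs (f a (q + del) - f a q) <= Mb * Rabs (q + del - q))
    by (apply (f_lipschitz_q f fs fq Mb HC HN a); unfold inT1; lra).
  replace (q + del - q) with del in I2, I3 by ring. rewrite (Rabs_right del) in I3 by lra.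
  rewrite Hsplit. unfold Rminus at 1. eapply Rle_trans; [apply Rabs_triang|]. rewrite Rabs_Ropp.
  eapply Rle_trans; [apply Rplus_le_compat_r, Rabs_triang|].
  assert ((q - a) * (Mb * W) <= Mb * W) by (assert (0 <= Mb * W) by nra; nra). nra.
Qed.

(* Shifting the second variable by del changes F by O(del): the difference
   w a q = F a (q + del) - F a q solves the same transport equation on the
   triangle T_(1 - del), with an O(del) source. *)
Lemma F_shift_q del : 0 < del < 1 -> forall a q, 0 <= a < q -> q <= 1 - del ->
  Rabs (F a (q + del) - F a q) <= 2 * (del * Mb * (CF Mb + 1)) * exp (2 * Mb).
Proof.
  intros Hdel. assert (HCF := CF_pos Mb HMb).
  set (w := fun a q => F a (q + del) - F a q).
  apply (diagonal_gronwall w (fun a q => rhsF f F a (q + del) - rhsF f F a q) (1 - del));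
    [lra | lra | apply Rmult_le_pos; [apply Rmult_le_pos|]; lra | | |].
  - apply cont_on_minus.
    + apply (cont_on_shift_q inT1); auto. intros a q H; unfold inTr, inT1 in *; lra.
    + apply (cont_on_weaken inT1); auto. intros a q H; unfold inTr, inT1 in *; lra.
  - intros q Hq. unfold w. rewrite !HF_edge by lra. ring.
  - intros a q Ha Haq Hq. split.
    + apply (is_derive_minus (fun t => F (a + t) (q + t + del)) (fun t => F (a + t) (q + t))).
      * apply (is_derive_ext (fun t => F (a + t) (q + del + t))); [intros t; f_equal; ring|].
        apply HF_deriv; lra.
      * apply HF_deriv; lra.
    + intros W HW. assert (HW0 : 0 <= W) by (eapply Rle_trans; [apply Rabs_pos | apply (HW a); lra]).
      apply rhsF_shift_bound; auto; lra.
Qed.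

(* s |-> F s 1 is Lipschitz: compare F s' 1 with F s (1 - (s' - s)) along a
   characteristic, then shift the second variable back to 1. *)
Lemma F_lipschitz_top s s' : 0 <= s <= s' -> s' < 1 -> Rabs (F s' 1 - F s 1) <= CL Mb * (s' - s).
Proof.
  intros Hss Hs'. assert (HCF := CF_pos Mb HMb).
  destruct (Req_dec s s') as [<- | Hne].
  { rewrite !Rminus_diag, Rabs_R0, Rmult_0_r. lra. }
  set (del := s' - s).
  assert (Hchar := F_lipschitz_diagonal s s' (1 - s') ltac:(lra) ltac:(lra) ltac:(lra)).
  assert (Hshift := F_shift_q del ltac:(unfold del; lra) s (1 - del) ltac:(unfold del; lra) ltac:(lra)).
  replace (1 - s' + s') with 1 in Hchar by ring.
  replace (1 - del + del) with 1 in Hshift by ring.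
  replace (1 - del) with (1 - s' + s) in Hshift by (unfold del; ring).
  replace (F s' 1 - F s 1) with ((F s' 1 - F s (1 - s' + s)) - (F s 1 - F s (1 - s' + s))) by ring.
  eapply Rle_trans; [apply Rabs_triang|]. rewrite Rabs_Ropp. fold del in Hchar |- *.
  unfold CL. nra.
Qed.

End OneKernelF.

Definition Kglue (M P : R -> R -> R) (s q : R) : R := if Rle_dec s q then P s q else M s q.

Lemma Kglue_P M P s q : s <= q -> Kglue M P s q = P s q.
Proof. intros H. unfold Kglue. destruct Rle_dec; [auto | lra]. Qed.

Lemma Kglue_M M P s q : q < s -> Kglue M P s q = M s q.
Proof. intros H. unfold Kglue. destruct Rle_dec; [lra | auto]. Qed.

Definition rhsK (f K : R -> R -> R) (s q : R) : R := RInt (fun r => f s r * K r q) s 1.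

(* Constants: the bound of K, and its linear growth rate in s. *)
Definition CK (Mb hp : R) : R := 2 * (hp * CF Mb) * exp (2 * (hp * Mb)).
Definition CKL (Mb hp : R) : R := Mb * CK Mb hp + hp * (Mb * (CF Mb + 1)).

Lemma CK_pos Mb hp : 0 < Mb -> 0 < hp -> 0 < CK Mb hp.
Proof.
  intros HMb Hhp. unfold CK. assert (H := CF_pos Mb HMb).
  assert (Hx := exp_pos (2 * (hp * Mb))). assert (0 < hp * CF Mb) by nra. nra.
Qed.

Lemma CKL_pos Mb hp : 0 < Mb -> 0 < hp -> 0 < CKL Mb hp.
Proof.
  intros HMb Hhp. unfold CKL. assert (H1 := CF_pos Mb HMb). assert (H2 := CK_pos Mb hp HMb Hhp).
  assert (0 < Mb * CK Mb hp) by nra. assert (0 < Mb * (CF Mb + 1)) by nra. nra.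
Qed.

(* Backward characteristic t |-> (s - h t, q + t) from (s, q), followed until
   it leaves the square through the edge s = 0 or the edge q = 1. *)
Definition exit_time (h s q : R) : R := Rmin (s / h) (1 - q).

Section Characteristics.

Variables (h s q : R).
Hypothesis Hh : 0 < h.
Hypothesis Hsq : inSq s q.

Lemma exit_time_bounds : 0 <= exit_time h s q <= 1 - q /\ h * exit_time h s q <= s.
Proof.
  unfold exit_time, inSq in *.
  assert (0 <= s / h) by (apply Rmult_le_pos; [lra | left; apply Rinv_0_lt_compat; lra]).
  assert (Rmin (s / h) (1 - q) <= s / h) by apply Rmin_l.
  assert (h * Rmin (s / h) (1 - q) <= h * (s / h)) by (apply Rmult_le_compat_l; lra).
  replace (h * (s / h)) with s in * by (field; lra).
  split; [split; [apply Rmin_glb; lra | apply Rmin_r] | auto].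
Qed.

Lemma char_in_square t : 0 <= t <= exit_time h s q -> inSq (s - h * t) (q + t).
Proof.
  intros Ht. destruct exit_time_bounds as [HT HhT]. unfold inSq in *.
  assert (h * t <= h * exit_time h s q) by (apply Rmult_le_compat_l; lra).
  assert (0 <= h * t) by nra. lra.
Qed.

Lemma char_interior t : 0 < t < exit_time h s q -> 0 < s - h * t /\ q + t < 1.
Proof.
  intros Ht. destruct exit_time_bounds as [HT HhT].
  assert (h * t < h * exit_time h s q) by (apply Rmult_lt_compat_l; lra). lra.
Qed.

Lemma char_exit :
  (exit_time h s q = s / h /\ s - h * (s / h) = 0 /\ q + s / h <= 1) \/
  (exit_time h s q = 1 - q /\ 0 <= s - h * (1 - q) <= 1).
Proof.
  unfold exit_time, inSq in *. unfold Rmin. destruct Rle_dec.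
  - left. split; auto. split; [field; lra | lra].
  - right. split; auto.
    assert (h * (1 - q) < h * (s / h)) by (apply Rmult_lt_compat_l; lra).
    replace (h * (s / h)) with s in H by (field; lra). assert (0 <= h * (1 - q)) by nra. lra.
Qed.

End Characteristics.

Lemma exit_time_antimono h h' s q : 0 < h' <= h -> 0 <= s -> exit_time h s q <= exit_time h' s q.
Proof.
  intros Hh Hs. unfold exit_time. apply Rle_min_compat_r.
  unfold Rdiv. apply Rmult_le_compat_l; auto. apply Rinv_le_contravar; lra.
Qed.

Lemma char_off_diagonal h s q t : 0 < h -> t <> (s - q) / (1 + h) -> s - h * t <> q + t.
Proof.
  intros Hh Hne E. apply Hne. apply (Rmult_eq_reg_l (1 + h)); [|lra].
  field_simplify; lra.
Qed.

Lemma locally_of_ball (Q : R -> Prop) rho : 0 < rho -> (forall t, Rabs t < rho -> Q t) ->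
  locally 0 Q.
Proof.
  intros Hr H. exists (mkposreal rho Hr). intros y Hy. apply H.
  unfold ball in Hy; cbn in Hy; unfold AbsRing_ball, abs, minus, plus, opp in Hy; cbn in Hy.
  rewrite Ropp_0, Rplus_0_r in Hy. auto.
Qed.

Section OneKernelK.

Context {Mb hp h : R} {f fs fq F M P : R -> R -> R}.
Hypothesis Had : admissible Mb hp h f fs fq F M P.

Let HMb : 0 < Mb := proj1 Had.
Let Hh : 0 < h <= hp := proj1 (proj2 Had).
Let HC : C1_T1 f fs fq := proj1 (proj2 (proj2 Had)).
Let HN : C1_norm_T1 f fs fq <= Mb := proj1 (proj2 (proj2 (proj2 Had))).
Let HK : kernel_sol h f F M P := proj2 (proj2 (proj2 (proj2 Had))).
Let Hf_cont : cont_on inT1 f := proj1 HC.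
Let Hfb := f_bounds f fs fq Mb HC HN.

Lemma K_eq_M s q : inT3 s q -> Kglue M P s q = M s q.
Proof.
  intros H3. unfold Kglue, inT3 in *. destruct Rle_dec; auto.
  assert (s = q) by lra. subst q. symmetry. apply HK. lra.
Qed.

Lemma K_edge q : 0 <= q <= 1 -> Kglue M P 0 q = 0.
Proof. intros Hq. rewrite Kglue_P by lra. apply HK. auto. Qed.

Lemma K_top s : 0 <= s <= 1 -> Kglue M P s 1 = h * F s 1.
Proof. intros Hs. rewrite Kglue_P by lra. apply HK. auto. Qed.

(* M and P agree on the diagonal, so the glued kernel is continuous. *)
Lemma K_cont : cont_on inSq (Kglue M P).
Proof.
  destruct HK as [_ [HMc [HPc [_ [_ [_ [_ [HMP _]]]]]]]].
  intros s q Hsq eps He. unfold inSq in Hsq.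
  destruct (Rlt_dec s q) as [H1|H1]; [|destruct (Rlt_dec q s) as [H2|H2]].
  - destruct (HPc s q ltac:(unfold inT1; lra) eps He) as [d [Hd Kd]].
    exists (Rmin d ((q - s) / 2)); split; [apply Rmin_pos; lra|].
    intros s' q' Hs' A1 A2. assert (B1 := Rmin_l d ((q - s) / 2)).
    assert (B2 := Rmin_r d ((q - s) / 2)).
    apply Rabs_def2 in A1. apply Rabs_def2 in A2. unfold inSq in Hs'.
    rewrite !Kglue_P by lra. apply Kd; unfold inT1; try lra; apply Rabs_def1; lra.
  - destruct (HMc s q ltac:(unfold inT3; lra) eps He) as [d [Hd Kd]].
    exists (Rmin d ((s - q) / 2)); split; [apply Rmin_pos; lra|].
    intros s' q' Hs' A1 A2. assert (B1 := Rmin_l d ((s - q) / 2)).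
    assert (B2 := Rmin_r d ((s - q) / 2)).
    apply Rabs_def2 in A1. apply Rabs_def2 in A2. unfold inSq in Hs'.
    rewrite !Kglue_M by lra. apply Kd; unfold inT3; try lra; apply Rabs_def1; lra.
  - assert (q = s) by lra. subst q.
    destruct (HPc s s ltac:(unfold inT1; lra) eps He) as [d1 [Hd1 K1]].
    destruct (HMc s s ltac:(unfold inT3; lra) eps He) as [d2 [Hd2 K2]].
    exists (Rmin d1 d2); split; [apply Rmin_pos; lra|].
    intros s' q' Hs' A1 A2. assert (B1 := Rmin_l d1 d2). assert (B2 := Rmin_r d1 d2).
    unfold inSq in Hs'. rewrite (Kglue_P M P s s) by lra.
    destruct (Rle_dec s' q').
    + rewrite Kglue_P by lra. apply K1; unfold inT1; lra.
    + rewrite Kglue_M by lra. rewrite <- (HMP s) by lra. apply K2; unfold inT3; lra.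
Qed.

Lemma ex_RInt_fK s q : 0 <= s <= 1 -> 0 <= q <= 1 -> ex_RInt (fun r => f s r * Kglue M P r q) s 1.
Proof.
  intros Hs Hq. apply ex_RInt_of_cont; [lra|]. apply cont_interval_mult.
  - apply (cont_on_col inT1 f s s 1 Hf_cont). intros r Hr; unfold inT1; lra.
  - apply (cont_on_row inSq); [apply K_cont|]. intros r Hr; unfold inSq; lra.
Qed.

Lemma rhsK_bound s q W : 0 <= s <= 1 -> 0 <= q <= 1 -> 0 <= W ->
  (forall r, s < r < 1 -> Rabs (Kglue M P r q) <= W) -> Rabs (rhsK f (Kglue M P) s q) <= Mb * W.
Proof.
  intros Hs Hq HW HKW. unfold rhsK.
  eapply Rle_trans.
  - apply (abs_RInt_mult_le (fun r => f s r) (fun r => Kglue M P r q) s 1 Mb W); try lra; auto.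
    + apply ex_RInt_fK; auto.
    + intros r Hr; apply Hfb; unfold inT1; lra.
  - assert (0 <= Mb * W) by nra. nra.
Qed.

(* Off the diagonal, Kglue M P satisfies the M- or the P-equation near (s, q); both
   read as the same transport equation with right-hand side h * rhsK. *)
Lemma K_deriv_forward s q : 0 < s < 1 -> 0 < q < 1 -> s <> q ->
  is_derive (fun t => Kglue M P (s + h * t) (q - t)) 0 (h * rhsK f (Kglue M P) s q).
Proof.
  intros Hs Hq Hne. destruct Hh as [Hh0 _].
  destruct HK as [_ [_ [_ [_ [_ [HMd [HPd _]]]]]]].
  assert (Ex := ex_RInt_fK s q ltac:(lra) ltac:(lra)).
  (* near t = 0 the point (s + h t, q - t) stays on the side of the diagonal of (s, q) *)
  assert (Hside : forall t, Rabs t < Rabs (s - q) / (2 * (1 + h)) ->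
            Rabs ((s + h * t) - (q - t) - (s - q)) < Rabs (s - q) / 2).
  { intros t Ht. replace ((s + h * t) - (q - t) - (s - q)) with ((1 + h) * t) by ring.
    rewrite Rabs_mult, (Rabs_right (1 + h)) by lra.
    apply (Rmult_lt_compat_l (1 + h)) in Ht; [|lra].
    replace ((1 + h) * (Rabs (s - q) / (2 * (1 + h)))) with (Rabs (s - q) / 2) in Ht by (field; lra).
    exact Ht. }
  assert (Hrho : 0 < Rabs (s - q) / (2 * (1 + h)))
    by (apply Rdiv_lt_0_compat; [apply Rabs_pos_lt; lra | lra]).
  unfold rhsK.
  destruct (Rlt_dec s q) as [H1|H1].
  - apply (is_derive_ext_loc (fun t => P (s + h * t) (q - t))).
    { apply (locally_of_ball _ _ Hrho). intros t Ht. rewrite Kglue_P; auto.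
      assert (X := Hside t Ht). apply Rabs_def2 in X. rewrite (Rabs_left (s - q)) in X by lra. lra. }
    rewrite <- (RInt_Chasles_R _ s q 1)
      by (try apply (ex_RInt_Chasles_1 (V := R_CompleteNormedModule) _ s q 1);
          try apply (ex_RInt_Chasles_2 (V := R_CompleteNormedModule) _ s q 1); auto; lra).
    rewrite (RInt_ext (fun r => f s r * Kglue M P r q) (fun r => f s r * P r q) s q).
    2:{ intros x Hx. rewrite Rmin_left in Hx by lra. rewrite Rmax_right in Hx by lra.
        rewrite Kglue_P; auto; lra. }
    rewrite (RInt_ext (fun r => f s r * Kglue M P r q) (fun r => f s r * M r q) q 1).
    2:{ intros x Hx. rewrite Rmin_left in Hx by lra. rewrite Rmax_right in Hx by lra.
        rewrite Kglue_M; auto; lra. }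
    replace (h * (RInt (fun r => f s r * P r q) s q + RInt (fun r => f s r * M r q) q 1))
      with (h * RInt (fun r => f s r * M r q) q 1 + h * RInt (fun r => f s r * P r q) s q) by ring.
    apply HPd; lra.
  - apply (is_derive_ext_loc (fun t => M (s + h * t) (q - t))).
    { apply (locally_of_ball _ _ Hrho). intros t Ht. rewrite Kglue_M; auto.
      assert (X := Hside t Ht). apply Rabs_def2 in X. rewrite (Rabs_right (s - q)) in X by lra. lra. }
    rewrite (RInt_ext (fun r => f s r * Kglue M P r q) (fun r => f s r * M r q) s 1).
    2:{ intros x Hx. rewrite Rmin_left in Hx by lra. rewrite Rmax_right in Hx by lra.
        rewrite Kglue_M; auto; lra. }
    apply HMd; lra.
Qed.

Lemma K_deriv_char s q t0 : s <= 1 -> 0 <= q -> 0 < t0 -> 0 < s - h * t0 -> q + t0 < 1 ->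
  s - h * t0 <> q + t0 ->
  is_derive (fun t => Kglue M P (s - h * t) (q + t)) t0 (- (h * rhsK f (Kglue M P) (s - h * t0) (q + t0))).
Proof.
  intros Hs Hq Ht0 H1 H2 H3. destruct Hh as [Hh0 _].
  replace (- (h * rhsK f (Kglue M P) (s - h * t0) (q + t0)))
    with (h * rhsK f (Kglue M P) (s - h * t0) (q + t0) / -1) by (field; lra).
  apply is_derive_reparam; [lra|].
  apply (is_derive_ext (fun u => Kglue M P ((s - h * t0) + h * u) ((q + t0) - u))); [intros u; f_equal; ring|].
  apply K_deriv_forward; auto; try lra. assert (0 < h * t0) by nra. lra.
Qed.

(* Continuity and derivative of K along a backward characteristic; the
   derivative exists except where the characteristic crosses the diagonal. *)
Lemma K_char_cont s q : inSq s q ->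
  cont_interval (fun t => Kglue M P (s - h * t) (q + t)) 0 (exit_time h s q).
Proof.
  intros Hsq. destruct Hh as [Hh0 _].
  apply (cont_interval_ext (fun t => Kglue M P (s + - h * t) (q + 1 * t)));
    [intros t _; f_equal; ring|].
  apply (cont_on_segment inSq _ s (- h) q 1 _ K_cont). intros t Ht.
  replace (s + - h * t) with (s - h * t) by ring. rewrite Rmult_1_l.
  apply char_in_square; auto.
Qed.

Lemma K_char_deriv s q t : inSq s q -> 0 < t < exit_time h s q -> t <> (s - q) / (1 + h) ->
  is_derive (fun t => Kglue M P (s - h * t) (q + t)) t
    (- (h * rhsK f (Kglue M P) (s - h * t) (q + t))).
Proof.
  intros Hsq Ht Hne. destruct Hh as [Hh0 _].
  destruct (char_interior h s q Hh0 Hsq t Ht) as [L1 L2]. unfold inSq in Hsq.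
  apply K_deriv_char; try lra. apply char_off_diagonal; auto.
Qed.

Lemma K_char_slope s q t W : inSq s q -> 0 < t < exit_time h s q -> 0 <= W ->
  (forall r, 0 <= r <= 1 -> Rabs (Kglue M P r (q + t)) <= W) ->
  Rabs (- (h * rhsK f (Kglue M P) (s - h * t) (q + t))) <= h * Mb * W.
Proof.
  intros Hsq Ht HW HKW. destruct Hh as [Hh0 Hhp].
  destruct (char_interior h s q Hh0 Hsq t Ht) as [L1 L2]. unfold inSq in Hsq.
  assert (0 <= h * t) by nra.
  assert (Hr := rhsK_bound (s - h * t) (q + t) W ltac:(lra) ltac:(lra) HW
                  ltac:(intros r Hr; apply HKW; lra)).
  rewrite Rabs_Ropp, Rabs_mult, (Rabs_right h) by lra.
  rewrite Rmult_assoc. apply Rmult_le_compat_l; lra.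
Qed.

Lemma K_exit_value s q : inSq s q ->
  let T := exit_time h s q in
  Kglue M P (s - h * T) (q + T) = 0 \/
  (T = 1 - q /\ 0 <= s - h * (1 - q) <= 1 /\
   Kglue M P (s - h * T) (q + T) = h * F (s - h * (1 - q)) 1).
Proof.
  intros Hsq T. destruct Hh as [Hh0 _]. assert (HT := exit_time_bounds h s q Hh0 Hsq).
  destruct (char_exit h s q Hh0 Hsq) as [[E1 [E2 E3]] | [E1 E2]]; unfold T in *; rewrite E1 in *.
  - left. rewrite E2. apply K_edge. unfold inSq in Hsq. lra.
  - right. repeat split; try lra. replace (q + (1 - q)) with 1 by ring. apply K_top. lra.
Qed.

(* A priori bound: Gronwall along backward characteristics, whose exit
   values are bounded by hp * CF. *)
Lemma K_bound : forall s q, inSq s q -> Rabs (Kglue M P s q) <= CK Mb hp.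
Proof.
  destruct Hh as [Hh0 Hhp]. assert (HCF := CF_pos Mb HMb).
  replace (CK Mb hp) with (2 * (hp * CF Mb + 0) * exp (2 * (hp * Mb)))
    by (unfold CK; ring).
  apply characteristic_gronwall; [nra | lra | nra | apply cont_on_square_bounded, K_cont|].
  intros s q Hsq.
  exists (fun t => Kglue M P (s - h * t) (q + t)),
         (fun t => - (h * rhsK f (Kglue M P) (s - h * t) (q + t))),
         (exit_time h s q), ((s - q) / (1 + h) :: nil).
  destruct (exit_time_bounds h s q Hh0 Hsq) as [HT HhT].
  split; [auto|]. split; [f_equal; ring|]. split; [|split; [apply K_char_cont; auto|]].
  - destruct (K_exit_value s q Hsq) as [-> | [_ [Hs' ->]]].
    + rewrite Rabs_R0. nra.
    + rewrite Rabs_mult, (Rabs_right h) by lra.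
      apply Rmult_le_compat; auto using Rabs_pos; [lra|]. apply (F_bound Had); unfold inT1; lra.
  - intros V HV t Ht Hne. split.
    + apply K_char_deriv; auto. intros E. apply Hne. left. auto.
    + rewrite Rplus_0_r.
      replace (hp * Mb * V * exp (2 * (hp * Mb) * (1 - q - t)))
        with (hp * Mb * (V * exp (2 * (hp * Mb) * (1 - (q + t)))))
        by (replace (1 - (q + t)) with (1 - q - t) by ring; ring).
      destruct (char_interior h s q Hh0 Hsq t Ht) as [L1 L2]. unfold inSq in Hsq.
      assert (HW0 : 0 <= V * exp (2 * (hp * Mb) * (1 - (q + t)))).
      { eapply Rle_trans; [apply Rabs_pos | apply (HV 0 (q + t)); unfold inSq; lra]. }
      eapply Rle_trans.
      * apply (K_char_slope s q t _ Hsq Ht HW0). intros r Hr. apply HV. unfold inSq; lra.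
      * apply Rmult_le_compat_r; [lra|]. apply Rmult_le_compat_r; lra.
Qed.

(* K vanishes on the edge s = 0, hence grows at most linearly in s. *)
Lemma K_linear_growth : forall s q, inSq s q -> Rabs (Kglue M P s q) <= CKL Mb hp * s.
Proof.
  intros s q Hsq. destruct Hh as [Hh0 Hhp].
  assert (HCF := CF_pos Mb HMb). assert (HCK := CK_pos Mb hp HMb ltac:(lra)).
  set (T := exit_time h s q).
  destruct (exit_time_bounds h s q Hh0 Hsq) as [HT HhT]. fold T in HT, HhT.
  assert (Hcmp := comparison_principle_except (fun t => Kglue M P (s - h * t) (q + t))
     (fun t => - (h * rhsK f (Kglue M P) (s - h * t) (q + t)))
     (fun t => h * Mb * CK Mb hp * t) (fun _ => h * Mb * CK Mb hp) ((s - q) / (1 + h) :: nil)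
     ltac:(intros t; auto_derive; auto; ring) 0 T ltac:(lra) (K_char_cont s q Hsq)).
  assert (Hd : forall t, 0 < t < T -> ~ In t ((s - q) / (1 + h) :: nil) ->
     is_derive (fun t => Kglue M P (s - h * t) (q + t)) t
       (- (h * rhsK f (Kglue M P) (s - h * t) (q + t))) /\
     Rabs (- (h * rhsK f (Kglue M P) (s - h * t) (q + t))) <= h * Mb * CK Mb hp).
  { intros t Ht Hne. split.
    - apply K_char_deriv; auto. intros E. apply Hne. left. auto.
    - apply K_char_slope; auto; [lra|]. intros r Hr. apply K_bound. unfold inSq in *.
      destruct (char_interior h s q Hh0 Hsq t Ht). lra. }
  specialize (Hcmp Hd). cbv beta in Hcmp.
  replace (s - h * 0) with s in Hcmp by ring. rewrite Rplus_0_r, Rmult_0_r in Hcmp.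
  assert (Hexit : Rabs (Kglue M P (s - h * T) (q + T)) <= hp * (Mb * (CF Mb + 1)) * s).
  { assert (HE := K_exit_value s q Hsq). cbv zeta in HE. fold T in HE.
    destruct HE as [-> | [_ [Hs' ->]]].
    - rewrite Rabs_R0. unfold inSq in Hsq.
      apply Rmult_le_pos; [apply Rmult_le_pos; [lra | nra] | lra].
    - rewrite Rabs_mult, (Rabs_right h) by lra.
      assert (HF := F_linear_growth Had (s - h * (1 - q)) 1 ltac:(unfold inT1; lra)).
      assert (Mb * (CF Mb + 1) * (s - h * (1 - q)) <= Mb * (CF Mb + 1) * s)
        by (apply Rmult_le_compat_l; unfold inSq in Hsq; nra).
      assert (h * Rabs (F (s - h * (1 - q)) 1) <= hp * (Mb * (CF Mb + 1) * s))
        by (apply Rmult_le_compat; auto using Rabs_pos; lra).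
      lra. }
  assert (h * Mb * CK Mb hp * T <= Mb * CK Mb hp * s)
    by (replace (h * Mb * CK Mb hp * T) with (Mb * CK Mb hp * (h * T)) by ring;
        apply Rmult_le_compat_l; nra).
  unfold CKL.
  replace (Kglue M P s q) with (Kglue M P (s - h * T) (q + T) -
                                (Kglue M P (s - h * T) (q + T) - Kglue M P s q)) by ring.
  eapply Rle_trans; [apply Rabs_triang|]. rewrite Rabs_Ropp. lra.
Qed.

End OneKernelK.

(* Bound of |F1 - F2| per unit of sup |f1 - f2|. *)
Definition CDF (Mb : R) : R := 2 * (CF Mb + 1) * exp (2 * Mb).

(* Constants of the difference estimate for K: B0 bounds the difference at
   the exit points of the characteristics, E0 the source term, and LK is the
   resulting Lipschitz constant of K with respect to (h, f). *)
Definition B0 (Mb hm hp : R) : R := CF Mb + hp * CDF Mb + hp * CL Mb + CKL Mb hp / hm.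
Definition E0 (Mb hp : R) : R := CK Mb hp * (Mb * (1 + 2 * hp) + hp).
Definition LK (Mb hm hp : R) : R := 2 * (B0 Mb hm hp + E0 Mb hp) * exp (2 * (hp * Mb)).

Lemma LK_pos Mb hm hp : 0 < Mb -> 0 < hm -> 0 < hp -> 0 < LK Mb hm hp.
Proof.
  intros HMb Hhm Hhp.
  assert (H1 := CF_pos Mb HMb). assert (H2 := CK_pos Mb hp HMb Hhp).
  assert (H3 := CKL_pos Mb hp HMb Hhp). assert (Hx := exp_pos (2 * Mb)).
  assert (HCL : 0 < CL Mb) by (unfold CL; apply Rmult_lt_0_compat; nra).
  assert (HCDF : 0 < CDF Mb) by (unfold CDF; nra).
  assert (HB0 : 0 < B0 Mb hm hp).
  { unfold B0. assert (0 < CKL Mb hp / hm) by (apply Rdiv_lt_0_compat; lra). nra. }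
  assert (HE0 : 0 < E0 Mb hp).
  { unfold E0. apply Rmult_lt_0_compat; nra. }
  unfold LK. assert (Hy := exp_pos (2 * (hp * Mb))). nra.
Qed.

(* When one characteristic leaves through the edge s = 0 (where K vanishes)
   at time s / ha, the other one, with the smaller speed hb, is at distance
   s (ha - hb) / ha <= |ha - hb| / hm from that edge, and K grows linearly. *)
Lemma left_exit_diff Mb hm hp ha hb fa fas faq Fa Ma Pa fb fbs fbq Fb Mb' Pb s q :
  admissible Mb hp ha fa fas faq Fa Ma Pa -> admissible Mb hp hb fb fbs fbq Fb Mb' Pb ->
  0 < hm -> hm <= hb <= ha -> inSq s q -> s / ha <= 1 - q ->
  Rabs (Kglue Ma Pa (s - ha * (s / ha)) (q + s / ha) - Kglue Mb' Pb (s - hb * (s / ha)) (q + s / ha))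
    <= CKL Mb hp / hm * Rabs (ha - hb).
Proof.
  intros Hada Hadb Hhm Hh Hsq Hlt. unfold inSq in Hsq.
  assert (Hs0 : 0 <= s / ha) by (apply Rmult_le_pos; [lra | left; apply Rinv_0_lt_compat; lra]).
  replace (s - ha * (s / ha)) with 0 by (field; lra).
  rewrite (K_edge Hada) by lra. rewrite Rminus_0_l, Rabs_Ropp.
  set (sig := s - hb * (s / ha)).
  assert (Hsig : sig * ha = s * (ha - hb)) by (unfold sig; field; lra).
  assert (Hsig0 : 0 <= sig) by (assert (0 <= s * (ha - hb)) by nra; nra).
  assert (Hsig1 : sig * hm <= ha - hb) by nra.
  assert (HKl := K_linear_growth Hadb sig (q + s / ha) ltac:(unfold inSq; nra)).
  assert (HCKL := CKL_pos Mb hp (proj1 Hada) ltac:(destruct Hada as [_ [? _]]; lra)).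
  eapply Rle_trans; [exact HKl|]. rewrite Rabs_right by lra.
  assert (sig <= (ha - hb) / hm)
    by (apply (Rmult_le_reg_r hm); [lra|]; unfold Rdiv; rewrite Rmult_assoc, Rinv_l; lra).
  unfold Rdiv in *. rewrite Rmult_assoc. apply Rmult_le_compat_l; lra.
Qed.

Lemma scaled_diff_bound hm h1 h2 k1 k2 L C D : 0 < hm -> hm <= h1 -> hm <= h2 ->
  Rabs (k1 - k2) <= L * D -> Rabs k2 <= C -> Rabs (h1 - h2) <= D ->
  Rabs (- (1 / h1) * k1 - - (1 / h2) * k2) <= (L / hm + C / (hm * hm)) * D.
Proof.
  intros Hhm Hh1 Hh2 Hk Hk2 Hh.
  assert (HC : 0 <= C) by (eapply Rle_trans; [apply Rabs_pos | exact Hk2]).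
  assert (HD : 0 <= D) by (eapply Rle_trans; [apply Rabs_pos | exact Hh]).
  replace (- (1 / h1) * k1 - - (1 / h2) * k2)
    with (- ((1 / h1) * (k1 - k2) + (h2 - h1) / (h1 * h2) * k2)) by (field; lra).
  rewrite Rabs_Ropp. eapply Rle_trans; [apply Rabs_triang|]. rewrite !Rabs_mult.
  rewrite (Rabs_right (1 / h1)) by (left; apply Rdiv_lt_0_compat; lra).
  rewrite Rabs_div, (Rabs_right (h1 * h2)), (Rabs_minus_sym h2 h1) by nra.
  assert (Hinv1 : 1 / h1 <= 1 / hm) by (apply Rmult_le_compat_l; [lra | apply Rinv_le_contravar; lra]).
  assert (Hinv2 : / (h1 * h2) <= / (hm * hm))
    by (apply Rinv_le_contravar; [nra | apply Rmult_le_compat; lra]).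
  assert (B1 : 1 / h1 * Rabs (k1 - k2) <= 1 / hm * (L * D))
    by (apply Rmult_le_compat; auto using Rabs_pos; left; apply Rdiv_lt_0_compat; lra).
  assert (B2 : Rabs (h1 - h2) / (h1 * h2) * Rabs k2 <= D / (hm * hm) * C).
  { apply Rmult_le_compat; auto using Rabs_pos.
    - apply Rmult_le_pos; [apply Rabs_pos | left; apply Rinv_0_lt_compat; nra].
    - apply Rmult_le_compat; auto using Rabs_pos. left; apply Rinv_0_lt_compat; nra. }
  replace ((L / hm + C / (hm * hm)) * D) with (1 / hm * (L * D) + D / (hm * hm) * C)
    by (field; lra).
  lra.
Qed.

Section TwoKernels.

Context {Mb hm hp h1 h2 Df : R}.
Context {f1 f1s f1q F1 M1 P1 f2 f2s f2q F2 M2 P2 : R -> R -> R}.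
Hypothesis Had1 : admissible Mb hp h1 f1 f1s f1q F1 M1 P1.
Hypothesis Had2 : admissible Mb hp h2 f2 f2s f2q F2 M2 P2.
Hypothesis Hhm : 0 < hm.
Hypothesis Hh1 : hm <= h1.
Hypothesis Hh2 : hm <= h2.
Hypothesis Hdf : forall s q, inT1 s q -> Rabs (f1 s q - f2 s q) <= Df.

Local Notation D := (Rmax (Rabs (h1 - h2)) Df).

Let HMb : 0 < Mb := proj1 Had1.
Let Hh1p : 0 < h1 <= hp := proj1 (proj2 Had1).
Let Hh2p : 0 < h2 <= hp := proj1 (proj2 Had2).
Let HC1 : C1_T1 f1 f1s f1q := proj1 (proj2 (proj2 Had1)).
Let HC2 : C1_T1 f2 f2s f2q := proj1 (proj2 (proj2 Had2)).
Let HN1 : C1_norm_T1 f1 f1s f1q <= Mb := proj1 (proj2 (proj2 (proj2 Had1))).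
Let HN2 : C1_norm_T1 f2 f2s f2q <= Mb := proj1 (proj2 (proj2 (proj2 Had2))).
Let HK1 : kernel_sol h1 f1 F1 M1 P1 := proj2 (proj2 (proj2 (proj2 Had1))).
Let HK2 : kernel_sol h2 f2 F2 M2 P2 := proj2 (proj2 (proj2 (proj2 Had2))).
Let Hf1b := f_bounds f1 f1s f1q Mb HC1 HN1.
Let Hf2b := f_bounds f2 f2s f2q Mb HC2 HN2.

Lemma Df_nonneg : 0 <= Df.
Proof. eapply Rle_trans; [apply Rabs_pos | apply (Hdf 0 0); unfold inT1; lra]. Qed.

Lemma D_bounds : Rabs (h1 - h2) <= D /\ Df <= D /\ 0 <= D.
Proof.
  assert (H1 := Rmax_l (Rabs (h1 - h2)) Df). assert (H2 := Rmax_r (Rabs (h1 - h2)) Df).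
  assert (H3 := Df_nonneg). lra.
Qed.

(* Difference of the right-hand sides of the two F-equations:
   f1 F1 - f2 F2 = f1 (F1 - F2) + (f1 - f2) F2. *)
Lemma rhsF_diff_bound a q W : 0 <= a <= q -> q <= 1 -> 0 <= W ->
  (forall r, a <= r < q -> Rabs (F1 r q - F2 r q) <= W) ->
  Rabs (rhsF f1 F1 a q - rhsF f2 F2 a q) <= Mb * W + Df * (CF Mb + 1).
Proof.
  intros Haq Hq HW HFW. assert (HDf := Df_nonneg). assert (HCF := CF_pos Mb HMb).
  assert (E1 := ex_RInt_fF f1 F1 a q (proj1 HC1) (proj1 HK1) ltac:(unfold inT1; lra)).
  assert (E2 := ex_RInt_fF f2 F2 a q (proj1 HC2) (proj1 HK2) ltac:(unfold inT1; lra)).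
  assert (HI : Rabs (RInt (fun r => f1 a r * F1 r q - f2 a r * F2 r q) a q)
               <= (q - a) * (Mb * W + Df * CF Mb)).
  { apply abs_RInt_le_open; [lra | nra | apply (ex_RInt_minus (V := R_NormedModule)); auto|].
    intros t Ht.
    replace (f1 a t * F1 t q - f2 a t * F2 t q)
      with (f1 a t * (F1 t q - F2 t q) + (f1 a t - f2 a t) * F2 t q) by ring.
    eapply Rle_trans; [apply Rabs_triang|]. rewrite !Rabs_mult.
    apply Rplus_le_compat; apply Rmult_le_compat; auto using Rabs_pos.
    - apply Hf1b; unfold inT1; lra.
    - apply HFW; lra.
    - apply Hdf; unfold inT1; lra.
    - apply (F_bound Had2); unfold inT1; lra. }
  assert (Hf0 : Rabs (f1 a q - f2 a q) <= Df) by (apply Hdf; unfold inT1; lra).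
  unfold rhsF.
  replace (RInt (fun r => f1 a r * F1 r q) a q - f1 a q -
           (RInt (fun r => f2 a r * F2 r q) a q - f2 a q))
    with (RInt (fun r => f1 a r * F1 r q - f2 a r * F2 r q) a q - (f1 a q - f2 a q))
    by (rewrite RInt_minus_R; auto; ring).
  unfold Rminus at 1. eapply Rle_trans; [apply Rabs_triang|]. rewrite Rabs_Ropp.
  assert ((q - a) * (Mb * W + Df * CF Mb) <= Mb * W + Df * CF Mb)
    by (assert (0 <= Mb * W + Df * CF Mb) by nra; nra).
  nra.
Qed.

(* The difference F1 - F2 solves the F-equation with a source O(Df). *)
Lemma F_diff : forall s q, inT1 s q -> Rabs (F1 s q - F2 s q) <= CDF Mb * Df.
Proof.
  assert (HDf := Df_nonneg). assert (HCF := CF_pos Mb HMb).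
  destruct HK1 as [HF1c [_ [_ [HF1d [HF10 _]]]]]. destruct HK2 as [HF2c [_ [_ [HF2d [HF20 _]]]]].
  assert (Hwc : cont_on inT1 (fun s q => F1 s q - F2 s q)) by (apply cont_on_minus; auto).
  assert (Hoff : forall s q, inT1 s q -> s < q -> Rabs (F1 s q - F2 s q) <= CDF Mb * Df + 0 * s).
  { intros s q Hsq Hl. rewrite Rmult_0_l, Rplus_0_r.
    replace (CDF Mb * Df) with (2 * (Df * (CF Mb + 1)) * exp (2 * Mb)) by (unfold CDF; ring).
    apply (diagonal_gronwall (fun s q => F1 s q - F2 s q)
             (fun s q => rhsF f1 F1 s q - rhsF f2 F2 s q) 1 Mb);
      [lra | lra | nra | auto | | | unfold inT1 in *; lra..].
    { intros q0 Hq0. rewrite HF10, HF20 by lra. ring. }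
    intros s0 q0 Hs0 Hsq0 Hq0. split.
    { apply (is_derive_minus (fun t => F1 (s0 + t) (q0 + t)) (fun t => F2 (s0 + t) (q0 + t)));
        [apply HF1d | apply HF2d]; lra. }
    intros W HW. assert (HW0 : 0 <= W) by (eapply Rle_trans; [apply Rabs_pos | apply (HW s0); lra]).
    apply rhsF_diff_bound; auto; lra. }
  intros s q Hsq. assert (H := bound_extends_to_diagonal _ _ 0 Hwc (Rle_refl 0) Hoff s q Hsq).
  lra.
Qed.

Local Notation K1 := (Kglue M1 P1).
Local Notation K2 := (Kglue M2 P2).

(* Pointwise estimate of the integrands of rhsK f1 K1 a1 and rhsK f2 K2 a2:
   f1 a1 K1 - f2 a2 K2 = f1 a1 (K1 - K2) + (f1 a1 - f1 a2) K2 + (f1 a2 - f2 a2) K2. *)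
Lemma rhsK_integrand_diff a1 a2 q r W : 0 <= a1 -> 0 <= a2 -> a1 < r -> a2 < r -> r < 1 ->
  0 <= q <= 1 -> Rabs (K1 r q - K2 r q) <= W ->
  Rabs (f1 a1 r * K1 r q - f2 a2 r * K2 r q)
    <= Mb * W + Mb * Rabs (a1 - a2) * CK Mb hp + Df * CK Mb hp.
Proof.
  intros Ha1 Ha2 Hr1 Hr2 Hr Hq HKW.
  replace (f1 a1 r * K1 r q - f2 a2 r * K2 r q) with
    (f1 a1 r * (K1 r q - K2 r q) + (f1 a1 r - f1 a2 r) * K2 r q
     + (f1 a2 r - f2 a2 r) * K2 r q) by ring.
  assert (HK2r : Rabs (K2 r q) <= CK Mb hp) by (apply (K_bound Had2); unfold inSq; lra).
  eapply Rle_trans; [apply Rabs_triang|].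
  eapply Rle_trans; [apply Rplus_le_compat_r, Rabs_triang|]. rewrite !Rabs_mult.
  repeat apply Rplus_le_compat; apply Rmult_le_compat; auto using Rabs_pos.
  - apply Hf1b; unfold inT1; lra.
  - apply (f_lipschitz_s f1 f1s f1q Mb HC1 HN1 r); unfold inT1; lra.
  - apply Hdf; unfold inT1; lra.
Qed.

Lemma rhsK_diff a1 a2 q W : 0 <= a1 <= 1 -> 0 <= a2 <= 1 -> 0 <= q <= 1 -> 0 <= W ->
  (forall r, 0 <= r <= 1 -> Rabs (K1 r q - K2 r q) <= W) ->
  Rabs (rhsK f1 K1 a1 q - rhsK f2 K2 a2 q)
    <= Mb * W + 2 * Mb * CK Mb hp * Rabs (a1 - a2) + Df * CK Mb hp.
Proof.
  intros Ha1 Ha2 Hq HW HKW.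
  assert (HDf := Df_nonneg). assert (HCK := CK_pos Mb hp HMb ltac:(lra)).
  set (m := Rmax a1 a2).
  assert (Hm1 := Rmax_l a1 a2). assert (Hm2 := Rmax_r a1 a2). fold m in Hm1, Hm2.
  assert (Hm3 : m <= 1) by (unfold m; apply Rmax_lub; lra).
  assert (Hma : (m - a1) + (m - a2) = Rabs (a1 - a2)).
  { unfold m, Rmax. destruct Rle_dec; unfold Rabs; destruct Rcase_abs; lra. }
  assert (E1 := ex_RInt_fK Had1 a1 q Ha1 Hq). assert (E2 := ex_RInt_fK Had2 a2 q Ha2 Hq).
  assert (E11 := ex_RInt_Chasles_1 (V := R_CompleteNormedModule) _ a1 m 1 ltac:(lra) E1).
  assert (E12 := ex_RInt_Chasles_2 (V := R_CompleteNormedModule) _ a1 m 1 ltac:(lra) E1).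
  assert (E21 := ex_RInt_Chasles_1 (V := R_CompleteNormedModule) _ a2 m 1 ltac:(lra) E2).
  assert (E22 := ex_RInt_Chasles_2 (V := R_CompleteNormedModule) _ a2 m 1 ltac:(lra) E2).
  assert (Hsplit : rhsK f1 K1 a1 q - rhsK f2 K2 a2 q =
            RInt (fun r => f1 a1 r * K1 r q - f2 a2 r * K2 r q) m 1
            + RInt (fun r => f1 a1 r * K1 r q) a1 m - RInt (fun r => f2 a2 r * K2 r q) a2 m).
  { unfold rhsK. rewrite <- (RInt_Chasles_R _ a1 m 1), <- (RInt_Chasles_R _ a2 m 1) by auto.
    rewrite RInt_minus_R by auto. ring. }
  assert (Hpoint : forall r, m < r < 1 -> Rabs (f1 a1 r * K1 r q - f2 a2 r * K2 r q)
                     <= Mb * W + Mb * Rabs (a1 - a2) * CK Mb hp + Df * CK Mb hp)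
    by (intros r Hr; apply rhsK_integrand_diff; try lra; apply HKW; lra).
  assert (J1 : Rabs (RInt (fun r => f1 a1 r * K1 r q - f2 a2 r * K2 r q) m 1)
               <= (1 - m) * (Mb * W + Mb * Rabs (a1 - a2) * CK Mb hp + Df * CK Mb hp)).
  { apply abs_RInt_le_open; [lra | | apply (ex_RInt_minus (V := R_NormedModule)); auto | exact Hpoint].
    assert (0 <= Mb * Rabs (a1 - a2) * CK Mb hp)
      by (apply Rmult_le_pos; [apply Rmult_le_pos|]; auto using Rabs_pos; lra).
    nra. }
  assert (J2 : Rabs (RInt (fun r => f1 a1 r * K1 r q) a1 m) <= (m - a1) * (Mb * CK Mb hp)).
  { apply abs_RInt_mult_le; auto; try lra.
    - intros r Hr; apply Hf1b; unfold inT1; lra.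
    - intros r Hr; apply (K_bound Had1); unfold inSq; lra. }
  assert (J3 : Rabs (RInt (fun r => f2 a2 r * K2 r q) a2 m) <= (m - a2) * (Mb * CK Mb hp)).
  { apply abs_RInt_mult_le; auto; try lra.
    - intros r Hr; apply Hf2b; unfold inT1; lra.
    - intros r Hr; apply (K_bound Had2); unfold inSq; lra. }
  rewrite Hsplit. unfold Rminus at 1. eapply Rle_trans; [apply Rabs_triang|]. rewrite Rabs_Ropp.
  eapply Rle_trans; [apply Rplus_le_compat_r, Rabs_triang|].
  assert (0 <= Mb * Rabs (a1 - a2) * CK Mb hp)
    by (apply Rmult_le_pos; [apply Rmult_le_pos|]; auto using Rabs_pos; lra).
  set (X := Mb * W + Mb * Rabs (a1 - a2) * CK Mb hp + Df * CK Mb hp) in *.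
  assert (HX : 0 <= X) by (unfold X; assert (0 <= Mb * W) by nra; assert (0 <= Df * CK Mb hp) by nra; lra).
  assert ((1 - m) * X <= X) by nra.
  assert ((m - a1) * (Mb * CK Mb hp) + (m - a2) * (Mb * CK Mb hp) = Rabs (a1 - a2) * (Mb * CK Mb hp))
    by (rewrite <- Hma; ring).
  unfold X in *. lra.
Qed.

Lemma char_slope_diff s q t W : inSq s q ->
  0 < t < exit_time h1 s q -> 0 < t < exit_time h2 s q -> 0 <= W ->
  (forall r, 0 <= r <= 1 -> Rabs (K1 r (q + t) - K2 r (q + t)) <= W) ->
  Rabs (- (h1 * rhsK f1 K1 (s - h1 * t) (q + t)) - - (h2 * rhsK f2 K2 (s - h2 * t) (q + t)))
    <= hp * Mb * W + E0 Mb hp * D.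
Proof.
  intros Hsq Ht1 Ht2 HW HKW.
  destruct (D_bounds) as [Hdh [HDfD HD0]]. assert (HDf := Df_nonneg).
  assert (HCK := CK_pos Mb hp HMb ltac:(lra)).
  destruct (char_interior h1 s q (proj1 Hh1p) Hsq t Ht1) as [L1 L2].
  destruct (char_interior h2 s q (proj1 Hh2p) Hsq t Ht2) as [L3 _].
  unfold inSq in Hsq. assert (0 <= h1 * t) by nra. assert (0 <= h2 * t) by nra.
  set (I1 := rhsK f1 K1 (s - h1 * t) (q + t)). set (I2 := rhsK f2 K2 (s - h2 * t) (q + t)).
  assert (HI1 : Rabs I1 <= Mb * CK Mb hp).
  { apply (rhsK_bound Had1); try lra. intros r Hr. apply (K_bound Had1). unfold inSq; lra. }
  assert (Hshift : Rabs ((s - h1 * t) - (s - h2 * t)) <= Rabs (h1 - h2)).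
  { replace ((s - h1 * t) - (s - h2 * t)) with ((h2 - h1) * t) by ring.
    rewrite Rabs_mult, (Rabs_right t), Rabs_minus_sym by lra.
    assert (0 <= Rabs (h1 - h2)) by apply Rabs_pos. nra. }
  assert (HI12 : Rabs (I1 - I2) <= Mb * W + 2 * Mb * CK Mb hp * D + Df * CK Mb hp).
  { eapply Rle_trans; [apply rhsK_diff; auto; lra|].
    assert (0 <= 2 * Mb * CK Mb hp) by nra.
    assert (2 * Mb * CK Mb hp * Rabs (s - h1 * t - (s - h2 * t)) <= 2 * Mb * CK Mb hp * D)
      by (apply Rmult_le_compat_l; lra).
    lra. }
  replace (- (h1 * I1) - - (h2 * I2)) with (- ((h1 - h2) * I1 + h2 * (I1 - I2))) by ring.
  rewrite Rabs_Ropp. eapply Rle_trans; [apply Rabs_triang|].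
  rewrite !Rabs_mult, (Rabs_right h2) by lra.
  assert (X1 : Rabs (h1 - h2) * Rabs I1 <= D * (Mb * CK Mb hp))
    by (apply Rmult_le_compat; auto using Rabs_pos).
  assert (X2 : h2 * Rabs (I1 - I2) <= hp * (Mb * W + 2 * Mb * CK Mb hp * D + Df * CK Mb hp))
    by (apply Rmult_le_compat; auto using Rabs_pos; lra).
  assert (X3 : hp * (Df * CK Mb hp) <= hp * (D * CK Mb hp))
    by (apply Rmult_le_compat_l; [lra | apply Rmult_le_compat_r; lra]).
  unfold E0. nra.
Qed.

Lemma B0_parts_nonneg : 0 <= CF Mb + hp * CDF Mb + hp * CL Mb /\ 0 <= CKL Mb hp / hm.
Proof.
  assert (H1 := CF_pos Mb HMb). assert (H3 := CKL_pos Mb hp HMb ltac:(lra)).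
  assert (Hx := exp_pos (2 * Mb)).
  assert (0 <= CL Mb) by (unfold CL; apply Rmult_le_pos; nra).
  assert (0 <= CDF Mb) by (unfold CDF; nra).
  split; [nra | apply Rmult_le_pos; [lra | left; apply Rinv_0_lt_compat; lra]].
Qed.

Lemma top_exit_diff s q : inSq s q -> 0 <= s - h1 * (1 - q) -> 0 <= s - h2 * (1 - q) ->
  Rabs (h1 * F1 (s - h1 * (1 - q)) 1 - h2 * F2 (s - h2 * (1 - q)) 1)
    <= (CF Mb + hp * CDF Mb + hp * CL Mb) * D.
Proof.
  intros Hsq Hs1 Hs2. unfold inSq in Hsq.
  destruct D_bounds as [Hdh [HDfD HD0]]. assert (HDf := Df_nonneg).
  assert (HCF := CF_pos Mb HMb). assert (Hx := exp_pos (2 * Mb)).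
  assert (HCL : 0 <= CL Mb) by (unfold CL; apply Rmult_le_pos; nra).
  set (s1 := s - h1 * (1 - q)). set (s2 := s - h2 * (1 - q)).
  change (0 <= s1) in Hs1. change (0 <= s2) in Hs2.
  assert (Hs1' : s1 <= 1) by (unfold s1; assert (0 <= h1 * (1 - q)) by nra; lra).
  assert (Hs2' : s2 <= 1) by (unfold s2; assert (0 <= h2 * (1 - q)) by nra; lra).
  assert (HF1 : Rabs (F1 s1 1) <= CF Mb) by (apply (F_bound Had1); unfold inT1; lra).
  assert (HFd : Rabs (F1 s1 1 - F2 s1 1) <= CDF Mb * Df) by (apply F_diff; unfold inT1; lra).
  (* the two exit points differ by |h1 - h2| (1 - q) *)
  assert (HFl : Rabs (F2 s1 1 - F2 s2 1) <= CL Mb * Rabs (h1 - h2)).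
  { destruct (Req_dec q 1) as [Eq | Nq].
    - unfold s1, s2. rewrite Eq, Rminus_diag, !Rmult_0_r, Rminus_diag, Rabs_R0.
      apply Rmult_le_pos; auto using Rabs_pos.
    - assert (Hq1 : q < 1) by (destruct Hsq as [_ [_ [Hq | Hq]]]; [auto | contradiction]).
      assert (0 < h1 * (1 - q)) by (apply Rmult_lt_0_compat; lra).
      assert (0 < h2 * (1 - q)) by (apply Rmult_lt_0_compat; lra).
      assert (Hlip := lipschitz_symmetrize (fun a => 0 <= a < 1) (fun a => F2 a 1) (CL Mb)
                        (fun a b Hab Ha Hb => F_lipschitz_top Had2 a b ltac:(lra) ltac:(lra))).
      eapply Rle_trans; [apply Hlip; unfold s1, s2 in *; lra|].
      apply Rmult_le_compat_l; auto.
      unfold s1, s2. replace (s - h1 * (1 - q) - (s - h2 * (1 - q))) with ((h2 - h1) * (1 - q)) by ring.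
      rewrite Rabs_mult, (Rabs_right (1 - q)), (Rabs_minus_sym h2) by lra.
      assert (0 <= Rabs (h1 - h2)) by apply Rabs_pos. nra. }
  replace (h1 * F1 s1 1 - h2 * F2 s2 1)
    with ((h1 - h2) * F1 s1 1 + h2 * (F1 s1 1 - F2 s1 1) + h2 * (F2 s1 1 - F2 s2 1)) by ring.
  eapply Rle_trans; [apply Rabs_triang|]. eapply Rle_trans; [apply Rplus_le_compat_r, Rabs_triang|].
  rewrite !Rabs_mult, (Rabs_right h2) by lra.
  assert (X1 : Rabs (h1 - h2) * Rabs (F1 s1 1) <= D * CF Mb)
    by (apply Rmult_le_compat; auto using Rabs_pos).
  assert (X2 : h2 * Rabs (F1 s1 1 - F2 s1 1) <= hp * (CDF Mb * D)).
  { apply Rmult_le_compat; auto using Rabs_pos; try lra.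
    eapply Rle_trans; [exact HFd|]. apply Rmult_le_compat_l; [unfold CDF; nra | lra]. }
  assert (X3 : h2 * Rabs (F2 s1 1 - F2 s2 1) <= hp * (CL Mb * D)).
  { apply Rmult_le_compat; auto using Rabs_pos; try lra.
    eapply Rle_trans; [exact HFl|]. apply Rmult_le_compat_l; lra. }
  nra.
Qed.

Lemma K_exit_diff s q : inSq s q ->
  let T := Rmin (exit_time h1 s q) (exit_time h2 s q) in
  Rabs (K1 (s - h1 * T) (q + T) - K2 (s - h2 * T) (q + T)) <= B0 Mb hm hp * D.
Proof.
  intros Hsq T. destruct B0_parts_nonneg as [HB3 HB1]. destruct D_bounds as [Hdh [_ HD0]].
  destruct Hh1p as [Hh10 _]. destruct Hh2p as [Hh20 _].
  destruct (exit_time_bounds h1 s q Hh10 Hsq) as [HT1 HhT1].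
  destruct (exit_time_bounds h2 s q Hh20 Hsq) as [HT2 HhT2].
  assert (Hleft : CKL Mb hp / hm * Rabs (h1 - h2) <= B0 Mb hm hp * D).
  { unfold B0. assert (CKL Mb hp / hm * Rabs (h1 - h2) <= CKL Mb hp / hm * D)
      by (apply Rmult_le_compat_l; auto). nra. }
  assert (Htop : T = 1 - q -> Rabs (K1 (s - h1 * T) (q + T) - K2 (s - h2 * T) (q + T))
                               <= B0 Mb hm hp * D).
  { intros HT. assert (Hmin1 := Rmin_l (exit_time h1 s q) (exit_time h2 s q)).
    assert (Hmin2 := Rmin_r (exit_time h1 s q) (exit_time h2 s q)). fold T in Hmin1, Hmin2.
    assert (0 <= s - h1 * (1 - q)) by (rewrite <- HT; nra).
    assert (0 <= s - h2 * (1 - q)) by (rewrite <- HT; nra).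
    unfold inSq in Hsq. rewrite HT. replace (q + (1 - q)) with 1 by ring.
    rewrite (K_top Had1), (K_top Had2) by (split; nra).
    eapply Rle_trans; [apply top_exit_diff; unfold inSq; auto|]. unfold B0. nra. }
  destruct (Rle_dec h2 h1) as [H21 | H12].
  - assert (HT : T = exit_time h1 s q)
      by (apply Rmin_left, exit_time_antimono; unfold inSq in Hsq; lra).
    destruct (char_exit h1 s q Hh10 Hsq) as [[E1 [E2 E3]] | [E1 E2]].
    + rewrite HT, E1. eapply Rle_trans; [|exact Hleft].
      apply (left_exit_diff Mb hm hp h1 h2 f1 f1s f1q F1 M1 P1 f2 f2s f2q F2 M2 P2); auto; lra.
    + apply Htop. rewrite HT. exact E1.
  - assert (HT : T = exit_time h2 s q)
      by (apply Rmin_right, exit_time_antimono; unfold inSq in Hsq; lra).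
    destruct (char_exit h2 s q Hh20 Hsq) as [[E1 [E2 E3]] | [E1 E2]].
    + rewrite HT, E1, Rabs_minus_sym. eapply Rle_trans; [|exact Hleft].
      rewrite (Rabs_minus_sym h1 h2).
      apply (left_exit_diff Mb hm hp h2 h1 f2 f2s f2q F2 M2 P2 f1 f1s f1q F1 M1 P1); auto; lra.
    + apply Htop. rewrite HT. exact E1.
Qed.

(* Main estimate: Gronwall along the pair of characteristics. *)
Lemma K_diff : forall s q, inSq s q -> Rabs (K1 s q - K2 s q) <= LK Mb hm hp * D.
Proof.
  destruct B0_parts_nonneg as [HB3 HB1]. destruct D_bounds as [Hdh [HDfD HD0]].
  destruct Hh1p as [Hh10 _]. destruct Hh2p as [Hh20 _].
  assert (HE0 : 0 <= E0 Mb hp * D).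
  { apply Rmult_le_pos; auto. unfold E0. assert (HCK := CK_pos Mb hp HMb ltac:(lra)).
    assert (0 < Mb * (1 + 2 * hp) + hp) by nra. nra. }
  replace (LK Mb hm hp * D) with (2 * (B0 Mb hm hp * D + E0 Mb hp * D) * exp (2 * (hp * Mb)))
    by (unfold LK; ring).
  apply characteristic_gronwall; [nra | auto | unfold B0; nra | |].
  { apply cont_on_square_bounded, cont_on_minus; [apply (K_cont Had1) | apply (K_cont Had2)]. }
  intros s q Hsq.
  set (T := Rmin (exit_time h1 s q) (exit_time h2 s q)).
  assert (Hmin1 := Rmin_l (exit_time h1 s q) (exit_time h2 s q)).
  assert (Hmin2 := Rmin_r (exit_time h1 s q) (exit_time h2 s q)). fold T in Hmin1, Hmin2.
  destruct (exit_time_bounds h1 s q Hh10 Hsq) as [HT1 _].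
  destruct (exit_time_bounds h2 s q Hh20 Hsq) as [HT2 _].
  exists (fun t => K1 (s - h1 * t) (q + t) - K2 (s - h2 * t) (q + t)),
         (fun t => - (h1 * rhsK f1 K1 (s - h1 * t) (q + t)) - - (h2 * rhsK f2 K2 (s - h2 * t) (q + t))),
         T, ((s - q) / (1 + h1) :: (s - q) / (1 + h2) :: nil).
  assert (HT0 : 0 <= T) by (unfold T; apply Rmin_glb; lra).
  split; [lra|]. split; [f_equal; f_equal; ring|]. split; [apply K_exit_diff; auto|]. split.
  { apply cont_interval_minus; eapply cont_interval_sub;
      [| | apply (K_char_cont Had1 s q Hsq) | | | apply (K_char_cont Had2 s q Hsq)]; lra. }
  intros V HV t Ht Hne. split.
  - apply (is_derive_minus (fun t => K1 (s - h1 * t) (q + t)) (fun t => K2 (s - h2 * t) (q + t))).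
    + apply (K_char_deriv Had1); auto; [lra|]. intros E. apply Hne. left. auto.
    + apply (K_char_deriv Had2); auto; [lra|]. intros E. apply Hne. right. left. auto.
  - destruct (char_interior h1 s q Hh10 Hsq t ltac:(lra)) as [L1 L2].
    unfold inSq in Hsq.
    assert (HW0 : 0 <= V * exp (2 * (hp * Mb) * (1 - (q + t)))).
    { eapply Rle_trans; [apply Rabs_pos | apply (HV 0 (q + t)); unfold inSq; lra]. }
    replace (hp * Mb * V * exp (2 * (hp * Mb) * (1 - q - t)))
      with (hp * Mb * (V * exp (2 * (hp * Mb) * (1 - (q + t)))))
      by (replace (1 - (q + t)) with (1 - q - t) by ring; ring).
    apply char_slope_diff; auto; try lra.
    intros r Hr. apply HV. unfold inSq; lra.
Qed.

(* The gains only involve M, i.e. K on the lower triangle T3. *)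
Lemma gain_Q1_diff s : 0 <= s <= 1 ->
  Rabs (gain_Q1 h1 M1 s - gain_Q1 h2 M2 s)
    <= (LK Mb hm hp / hm + CK Mb hp / (hm * hm)) * D.
Proof.
  intros Hs. destruct D_bounds as [Hdh _]. unfold gain_Q1.
  rewrite <- (K_eq_M Had1 s 0), <- (K_eq_M Had2 s 0) by (unfold inT3; lra).
  apply scaled_diff_bound; auto.
  - apply K_diff. unfold inSq; lra.
  - apply (K_bound Had2). unfold inSq; lra.
Qed.

Lemma gain_Q2_diff s : 0 <= s <= 1 ->
  Rabs (gain_Q2 M1 s - gain_Q2 M2 s) <= LK Mb hm hp * D.
Proof.
  intros Hs. unfold gain_Q2.
  rewrite <- (K_eq_M Had1 1 (1 - s)), <- (K_eq_M Had2 1 (1 - s)) by (unfold inT3; lra).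
  replace (- K1 1 (1 - s) - - K2 1 (1 - s)) with (- (K1 1 (1 - s) - K2 1 (1 - s))) by ring.
  rewrite Rabs_Ropp. apply K_diff. unfold inSq; lra.
Qed.

End TwoKernels.

Theorem lemma2 :
  forall (hm hp Mb : R), 0 < hm -> hm <= hp -> 0 < Mb ->
  exists LQ1 LQ2 : R, 0 < LQ1 /\ 0 < LQ2 /\
  forall (h1 h2 : R) (f1 f1s f1q f2 f2s f2q : R -> R -> R)
         (F1 M1 P1 F2 M2 P2 : R -> R -> R),
    hm <= h1 <= hp -> hm <= h2 <= hp ->
    C1_T1 f1 f1s f1q -> C1_T1 f2 f2s f2q ->
    C1_norm_T1 f1 f1s f1q <= Mb -> C1_norm_T1 f2 f2s f2q <= Mb ->
    kernel_sol h1 f1 F1 M1 P1 -> kernel_sol h2 f2 F2 M2 P2 ->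
    sup_01 (fun s => gain_Q1 h1 M1 s - gain_Q1 h2 M2 s)
      <= LQ1 * Rmax (Rabs (h1 - h2)) (sup_T1 (fun s q => f1 s q - f2 s q)) /\
    sup_01 (fun s => gain_Q2 M1 s - gain_Q2 M2 s)
      <= LQ2 * Rmax (Rabs (h1 - h2)) (sup_T1 (fun s q => f1 s q - f2 s q)).
Proof.
  intros hm hp Mb Hhm Hhp HMb.
  assert (HLK := LK_pos Mb hm hp HMb Hhm ltac:(lra)).
  assert (HCK := CK_pos Mb hp HMb ltac:(lra)).
  exists (LK Mb hm hp / hm + CK Mb hp / (hm * hm)), (LK Mb hm hp).
  split; [assert (0 < LK Mb hm hp / hm) by (apply Rdiv_lt_0_compat; lra);
          assert (0 < CK Mb hp / (hm * hm)) by (apply Rdiv_lt_0_compat; nra); lra|].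
  split; [exact HLK|].
  intros h1 h2 f1 f1s f1q f2 f2s f2q F1 M1 P1 F2 M2 P2 Hh1 Hh2 HC1 HC2 HN1 HN2 HK1 HK2.
  assert (Had1 : admissible Mb hp h1 f1 f1s f1q F1 M1 P1)
    by (split; [exact HMb | split; [lra | exact (conj HC1 (conj HN1 HK1))]]).
  assert (Had2 : admissible Mb hp h2 f2 f2s f2q F2 M2 P2)
    by (split; [exact HMb | split; [lra | exact (conj HC2 (conj HN2 HK2))]]).
  assert (Hdf := sup_T1_diff_ge f1 f1s f1q f2 f2s f2q Mb HC1 HC2 HN1 HN2).
  split; apply sup_01_le; intros s Hs.
  - exact (gain_Q1_diff Had1 Had2 Hhm (proj1 Hh1) (proj1 Hh2) Hdf s Hs).
  - exact (gain_Q2_diff Had1 Had2 Hhm (proj1 Hh1) (proj1 Hh2) Hdf s Hs).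
Qed.
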